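(* Let $B>1$, $p>0$, $c_B>0$, and $\alpha\in\mathbb{R}$ with $4p+2-\alpha>0$. For integers $j$ let $N_j=c_BB^{2j}$ and $K_j^M(\alpha)=\frac1{N_j}\sum_{l\ge1}f_p^2(l/B^j)(2l+1)l^{-\alpha}$ with $f_p(x)=x^{2p}e^{-x^2}$, and let $$I_{p,s}(\alpha)=\frac{2}{c_B}\int_0^\infty t^{4p+1-\alpha}e^{-2t^2}(\log t)^s\,dt,\qquad s=0,1,2.$$ Then $I_{p,0}(\alpha)=\frac{2^{-(2p-\frac{\alpha}{2}+1)}}{c_B}\Gamma\big(2p+1-\frac{\alpha}{2}\big)$ and, as $j\to\infty$, $$K_j^M(\alpha)=\big(I_{p,0}(\alpha)+o(1)\big)B^{-\alpha j},$$ $$\frac{d}{d\alpha}K_j^M(\alpha)=-\Big(j\log B+\frac{I_{p,1}(\alpha)}{I_{p,0}(\alpha)}+o(1)\Big)K_j^M(\alpha),$$ $$\frac{d^2}{d\alpha^2}K_j^M(\alpha)=\Big(j^2\log^2B+2j\log B\,\frac{I_{p,1}(\alpha)}{I_{p,0}(\alpha)}+\frac{I_{p,2}(\alpha)}{I_{p,0}(\alpha)}+o(1)\Big)K_j^M(\alpha).$$ *)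

From Stdlib Require Import Reals.
From Coquelicot Require Import Coquelicot.
Open Scope R_scope.

Definition Gamma (x : R) : R :=
  RInt_gen (fun t => Rpower t (x - 1) * exp (- t)) (at_right 0) (Rbar_locally p_infty).

Definition fp (p x : R) : R := Rpower x (2 * p) * exp (- x ^ 2).

Definition Nj (B cB : R) (j : nat) : R := cB * B ^ (2 * j).

Definition KM (B p cB : R) (j : nat) (alpha : R) : R :=
  / Nj B cB j *
  Series (fun n : nat =>
    let l := INR (S n) in
    (fp p (l / B ^ j)) ^ 2 * (2 * l + 1) * Rpower l (- alpha)).

Definition Ips (p cB : R) (s : nat) (alpha : R) : R :=
  2 / cB *
  RInt_gen (fun t => Rpower t (4 * p + 1 - alpha) * exp (- 2 * t ^ 2) * (ln t) ^ s)
    (at_right 0) (Rbar_locally p_infty).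

From Stdlib Require Import Reals Lra Lia Psatz.
From Coquelicot Require Import Coquelicot.
Open Scope R_scope.

(* Since [l^(-alpha) = B^(-alpha j) (l B^-j)^(-alpha)] and [2l + 1 = l (2 + 1/l)], the series
   [K_j^M(alpha)] is [B^(-alpha j)/c_B] times a Riemann sum, with mesh [B^-j], of
   [t^(4p+1-alpha) exp (-2 t^2)] (plus a weighted sum of lower order).  Differentiating the series
   termwise in [alpha] brings down powers of [-ln l = -(ln (l B^-j) + j ln B)], which turns the
   [alpha]-derivatives into the same Riemann sums with extra factors [(ln t)^s].  The integrands
   are bounded by [t^b] near [0] and [t^(b-1)] near [+oo] for some [-1 < b < 0], with derivative
   bounded by [t^(b-1)]; this gives a Riemann-sum error [O(B^(-g j))], [g > 0], which absorbs the
   polynomial factors [j] and [j^2].  The value of [I_{p,0}] is the substitution [t = 2 u^2] in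
   the Gamma integral. *)

Lemma ln_le_sub_1 y : 0 < y -> ln y <= y - 1.
Proof. intros Hy. pose proof (exp_ineq1_le (ln y)). rewrite exp_ln in H by exact Hy. lra. Qed.

Lemma exp_le_compat x y : x <= y -> exp x <= exp y.
Proof. intros [H | ->]; [left; apply exp_increasing|]; lra. Qed.

Lemma exp_pow_INR x n : exp x ^ n = exp (INR n * x).
Proof.
  induction n as [|n IH]; simpl.
  - rewrite Rmult_0_l, exp_0; ring.
  - rewrite IH, <- exp_plus. f_equal. destruct n; simpl; ring.
Qed.

Lemma Rpower_pos x y : 0 < Rpower x y.
Proof. apply exp_pos. Qed.

Lemma Rpower_1_l y : Rpower 1 y = 1.
Proof. unfold Rpower. rewrite ln_1, Rmult_0_r, exp_0. reflexivity. Qed.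

Lemma Rpower_sub_1 h b : 0 < h -> Rpower h b = h * Rpower h (b - 1).
Proof.
  intros Hh. replace b with (1 + (b - 1)) at 1 by ring.
  rewrite Rpower_plus, Rpower_1 by exact Hh. reflexivity.
Qed.

Lemma Rpower_add_1 h b : 0 < h -> Rpower h (b + 1) = h * h * Rpower h (b - 1).
Proof.
  intros Hh. replace (b + 1) with (1 + (1 + (b - 1))) by ring.
  rewrite !Rpower_plus, Rpower_1 by exact Hh. ring.
Qed.

Lemma Rle_Rpower_l_neg a b c : c <= 0 -> 0 < a <= b -> Rpower b c <= Rpower a c.
Proof.
  intros Hc [Ha Hab]. apply exp_le_compat.
  pose proof (ln_le a b Ha Hab). nra.
Qed.

Lemma Rpower_lt_near_0 c eps : 0 < c -> 0 < eps ->
  exists d, 0 < d /\ forall x, 0 < x -> x < d -> Rpower x c < eps.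
Proof.
  intros Hc He. exists (exp (ln eps / c)). split; [apply exp_pos|].
  intros x Hx Hxd. apply ln_increasing in Hxd; [|exact Hx]. rewrite ln_exp in Hxd.
  rewrite <- (exp_ln eps) by exact He. apply exp_increasing.
  replace (ln eps) with (c * (ln eps / c)) by (field; lra).
  apply Rmult_lt_compat_l; assumption.
Qed.

Lemma Rpower_lt_near_infty c eps : c < 0 -> 0 < eps ->
  exists M, 0 < M /\ forall y, M < y -> Rpower y c < eps.
Proof.
  intros Hc He. exists (exp (ln eps / c)). split; [apply exp_pos|].
  intros y Hy. apply ln_increasing in Hy; [|apply exp_pos]. rewrite ln_exp in Hy.
  rewrite <- (exp_ln eps) by exact He. apply exp_increasing.
  replace (ln eps) with (c * (ln eps / c)) by (field; lra). nra.
Qed.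

(* From [z <= exp (e z) / e] with [e = c / (m + 1)]. *)
Lemma exp_neg_mul_pow_le c m z : 0 < c -> 0 <= z ->
  exp (- c * z) * z ^ m <= ((INR m + 1) / c) ^ m.
Proof.
  intros Hc Hz. set (e := c / (INR m + 1)).
  assert (Hm : 0 < INR m + 1) by (pose proof (pos_INR m); lra).
  assert (He : 0 < e) by (apply Rdiv_lt_0_compat; lra).
  assert (Hlin : z <= exp (e * z) / e).
  { pose proof (exp_ineq1_le (e * z)). apply Rmult_le_reg_l with e; [exact He|].
    field_simplify; lra. }
  assert (Hpow : z ^ m <= exp (INR m * (e * z)) / e ^ m).
  { rewrite <- exp_pow_INR. unfold Rdiv. rewrite <- pow_inv, <- Rpow_mult_distr.
    apply pow_incr; split; assumption. }
  assert (Hprod : exp (- c * z) * exp (INR m * (e * z)) <= 1).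
  { rewrite <- exp_plus, <- exp_0. apply exp_le_compat.
    assert (INR m * e <= c).
    { apply Rmult_le_reg_r with (INR m + 1); [exact Hm|]. unfold e. field_simplify; lra. }
    nra. }
  replace (((INR m + 1) / c) ^ m) with (/ e ^ m) by (rewrite <- pow_inv; f_equal; unfold e; field; lra).
  apply Rle_trans with (exp (- c * z) * (exp (INR m * (e * z)) / e ^ m)).
  - apply Rmult_le_compat_l; [left; apply exp_pos | exact Hpow].
  - unfold Rdiv. rewrite <- Rmult_assoc. rewrite <- (Rmult_1_l (/ e ^ m)) at 2.
    apply Rmult_le_compat_r; [left; apply Rinv_0_lt_compat, pow_lt, He | exact Hprod].
Qed.

Lemma Rpower_ln_gauss_le_near_0 c m n t : 0 < c -> 0 < t -> ln t <= 0 ->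
  Rpower t c * Rabs (ln t) ^ m * t ^ n * exp (- 2 * t ^ 2) <= ((INR m + 1) / c) ^ m.
Proof.
  intros Hc Ht Hl. rewrite <- (Rpower_pow n t) by exact Ht. unfold Rpower.
  rewrite Rabs_left1 by exact Hl.
  assert (A1 : exp (INR n * ln t) <= 1)
    by (rewrite <- exp_0; apply exp_le_compat; pose proof (pos_INR n); nra).
  assert (A2 : exp (- 2 * t ^ 2) <= 1) by (rewrite <- exp_0; apply exp_le_compat; nra).
  pose proof (exp_neg_mul_pow_le c m (- ln t) Hc ltac:(lra)) as A3.
  replace (- c * - ln t) with (c * ln t) in A3 by ring.
  assert (0 <= exp (c * ln t) * (- ln t) ^ m)
    by (apply Rmult_le_pos; [left; apply exp_pos | apply pow_le; lra]).
  pose proof (exp_pos (INR n * ln t)). pose proof (exp_pos (- 2 * t ^ 2)).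
  assert (exp (c * ln t) * (- ln t) ^ m * exp (INR n * ln t) * exp (- 2 * t ^ 2)
          <= exp (c * ln t) * (- ln t) ^ m * 1 * 1).
  { apply Rmult_le_compat; try lra; [apply Rmult_le_pos; lra | apply Rmult_le_compat_l; lra]. }
  lra.
Qed.

(* With [K = c + m + n], the left side is at most
   [exp (K ln t - 2 t^2) <= exp (K t - 2 t^2) <= exp (K^2/8)]. *)
Lemma Rpower_ln_gauss_le_near_infty c m n t : 0 < c -> 0 < t -> 0 < ln t ->
  Rpower t c * Rabs (ln t) ^ m * t ^ n * exp (- 2 * t ^ 2) <= exp ((c + INR m + INR n) ^ 2 / 8).
Proof.
  intros Hc Ht Hl. set (K := c + INR m + INR n).
  assert (HK : 0 <= K) by (unfold K; pose proof (pos_INR m); pose proof (pos_INR n); lra).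
  rewrite <- (Rpower_pow n t) by exact Ht. unfold Rpower.
  rewrite Rabs_right by lra.
  assert (B1 : ln t ^ m <= exp (INR m * ln t)).
  { rewrite <- exp_pow_INR. apply pow_incr. pose proof (exp_ineq1_le (ln t)); lra. }
  assert (B2 : ln t <= t) by (pose proof (ln_le_sub_1 t Ht); lra).
  assert (B3 : exp (c * ln t) * ln t ^ m * exp (INR n * ln t) * exp (- 2 * t ^ 2)
    <= exp (c * ln t) * exp (INR m * ln t) * exp (INR n * ln t) * exp (- 2 * t ^ 2)).
  { repeat apply Rmult_le_compat_r; try (left; apply exp_pos).
    apply Rmult_le_compat_l; [left; apply exp_pos | exact B1]. }
  rewrite <- !exp_plus in B3. eapply Rle_trans; [exact B3|]. apply exp_le_compat.
  replace (c * ln t + INR m * ln t + INR n * ln t) with (K * ln t) by (unfold K; ring).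
  assert (K * ln t <= K * t) by (apply Rmult_le_compat_l; assumption).
  pose proof (pow2_ge_0 (t - K / 4)). nra.
Qed.

Lemma Rpower_ln_gauss_bounded c m n : 0 < c -> exists M, forall t, 0 < t ->
  Rpower t c * Rabs (ln t) ^ m * t ^ n * exp (- 2 * t ^ 2) <= M.
Proof.
  intros Hc. exists (((INR m + 1) / c) ^ m + exp ((c + INR m + INR n) ^ 2 / 8)). intros t Ht.
  assert (0 < ((INR m + 1) / c) ^ m)
    by (apply pow_lt, Rdiv_lt_0_compat; [pose proof (pos_INR m); lra | exact Hc]).
  pose proof (exp_pos ((c + INR m + INR n) ^ 2 / 8)).
  destruct (Rle_or_lt (ln t) 0) as [Hl | Hl].
  - pose proof (Rpower_ln_gauss_le_near_0 c m n t Hc Ht Hl). lra.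
  - pose proof (Rpower_ln_gauss_le_near_infty c m n t Hc Ht Hl). lra.
Qed.

Ltac continuous_by_derive :=
  match goal with |- continuous ?g ?t => apply (ex_derive_continuous g) end.

Lemma is_derive_Rpower e t : 0 < t -> is_derive (fun t => Rpower t e) t (e * Rpower t (e - 1)).
Proof. intros Ht. apply is_derive_Reals, derivable_pt_lim_power, Ht. Qed.

Lemma continuous_Rpower_pos e t : 0 < t -> continuous (fun t => Rpower t e) t.
Proof. intros Ht. continuous_by_derive. eexists. apply is_derive_Rpower, Ht. Qed.

Lemma ex_RInt_continuous_pos (f : R -> R) x y :
  (forall t, 0 < t -> continuous f t) -> 0 < x -> x <= y -> ex_RInt f x y.
Proof.
  intros Hf Hx Hxy. apply (ex_RInt_continuous (V := R_CompleteNormedModule)).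
  intros z Hz. apply Hf. rewrite Rmin_left in Hz; lra.
Qed.

Lemma RInt_Chasles_pos (f : R -> R) a b c : (forall t, 0 < t -> continuous f t) ->
  0 < a -> a <= b -> b <= c -> RInt f a c = RInt f a b + RInt f b c.
Proof.
  intros Hf Ha Hab Hbc. symmetry.
  apply (RInt_Chasles (V := R_CompleteNormedModule)); apply ex_RInt_continuous_pos; auto; lra.
Qed.

Lemma abs_RInt_le_Rpower f C e x y : (forall t, 0 < t -> continuous f t) ->
  0 < x -> x <= y -> e + 1 <> 0 ->
  (forall t, x <= t <= y -> Rabs (f t) <= C * Rpower t e) ->
  Rabs (RInt f x y) <= C * (Rpower y (e + 1) - Rpower x (e + 1)) / (e + 1).
Proof.
  intros Hf Hx Hxy He Hb.
  eapply Rle_trans; [apply abs_RInt_le; [exact Hxy | apply ex_RInt_continuous_pos; auto]|].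
  assert (HI : is_RInt (fun t => C * Rpower t e) x y
                 (C * (Rpower y (e + 1) - Rpower x (e + 1)) / (e + 1))).
  { set (F := fun t => C / (e + 1) * Rpower t (e + 1)).
    replace (C * (Rpower y (e + 1) - Rpower x (e + 1)) / (e + 1)) with (minus (F y) (F x))
      by (unfold F, minus, plus, opp; simpl; field; exact He).
    apply (is_RInt_derive (V := R_CompleteNormedModule)).
    - intros t Ht. rewrite Rmin_left, Rmax_right in Ht by lra. unfold F.
      replace (C * Rpower t e) with (C / (e + 1) * ((e + 1) * Rpower t (e + 1 - 1)))
        by (replace (e + 1 - 1) with e by ring; field; exact He).
      apply is_derive_scal, is_derive_Rpower; lra.
    - intros t Ht. rewrite Rmin_left, Rmax_right in Ht by lra.
      continuous_by_derive. unfold Rpower. auto_derive. lra. }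
  rewrite <- (is_RInt_unique _ _ _ _ HI).
  apply RInt_le; [exact Hxy | | eexists; exact HI | intros t Ht; apply Hb; lra].
  apply ex_RInt_continuous_pos; auto. intros t Ht. apply continuous_Rabs_comp; auto.
Qed.

(* [partial_sum a N = a 0 + ... + a (N - 1)]; unlike [sum_n] it starts from the empty sum. *)
Fixpoint partial_sum (a : nat -> R) (N : nat) : R :=
  match N with O => 0 | S k => partial_sum a k + a k end.

Lemma partial_sum_S_sum_n a N : partial_sum a (S N) = sum_n a N.
Proof.
  induction N as [|N IH]; simpl; [rewrite sum_O; ring|].
  rewrite sum_Sn, <- IH. reflexivity.
Qed.

Lemma is_lim_seq_partial_sum a (l : R) : is_series a l <-> is_lim_seq (partial_sum a) l.
Proof.
  split; intros H.
  - apply is_lim_seq_incr_1. eapply is_lim_seq_ext; [|exact H].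
    intros n; symmetry; apply partial_sum_S_sum_n.
  - apply is_lim_seq_incr_1 in H.
    assert (H' : is_lim_seq (sum_n a) l)
      by (eapply is_lim_seq_ext; [|exact H]; intros n; apply partial_sum_S_sum_n).
    exact H'.
Qed.

Lemma Rabs_partial_sum_le a N : Rabs (partial_sum a N) <= partial_sum (fun n => Rabs (a n)) N.
Proof.
  induction N as [|N IH]; simpl; [rewrite Rabs_R0; lra|].
  eapply Rle_trans; [apply Rabs_triang | lra].
Qed.

Lemma partial_sum_le a b N : (forall n, a n <= b n) -> partial_sum a N <= partial_sum b N.
Proof. intros H; induction N as [|N IH]; simpl; [lra | specialize (H N); lra]. Qed.

Lemma partial_sum_scal c a N : partial_sum (fun n => c * a n) N = c * partial_sum a N.
Proof. induction N as [|N IH]; simpl; [ring | rewrite IH; ring]. Qed.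

Lemma Rabs_lim_le u (l : R) M : is_lim_seq u l -> (forall n, Rabs (u n) <= M) -> Rabs l <= M.
Proof.
  intros H HM. apply is_lim_seq_abs in H.
  exact (is_lim_seq_le _ _ _ _ HM H (is_lim_seq_const M)).
Qed.

Lemma ex_series_bounded_nonneg (z : nat -> R) Z : (forall n, 0 <= z n) ->
  (forall N, partial_sum z N <= Z) -> ex_series z.
Proof.
  intros Hz HZ.
  destruct (growing_cv (partial_sum z)) as [l Hl].
  - intros n. simpl. specialize (Hz n). lra.
  - exists Z. intros x [i ->]. apply HZ.
  - apply is_lim_seq_Reals in Hl. exists l. apply is_lim_seq_partial_sum, Hl.
Qed.

(* The right-hand side is the mean of the decreasing function [t^(b-1)] over [[u, u+1]]. *)
Lemma Rpower_succ_le_diff b u : b < 0 -> 1 <= u ->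
  Rpower (u + 1) (b - 1) <= (Rpower u b - Rpower (u + 1) b) / (- b).
Proof.
  intros Hb Hu.
  destruct (MVT_gen (fun t => Rpower t b) u (u + 1) (fun t => b * Rpower t (b - 1)))
    as [c [Hc Heq]].
  - intros x Hx. rewrite Rmin_left, Rmax_right in Hx by lra. apply is_derive_Rpower; lra.
  - intros x Hx. rewrite Rmin_left, Rmax_right in Hx by lra.
    apply continuity_pt_filterlim, continuous_Rpower_pos; lra.
  - rewrite Rmin_left, Rmax_right in Hc by lra.
    replace ((Rpower u b - Rpower (u + 1) b) / - b) with (Rpower c (b - 1))
      by (replace (Rpower u b - Rpower (u + 1) b) with (- (b * Rpower c (b - 1) * (u + 1 - u)))
            by lra; field; lra).
    apply Rle_Rpower_l_neg; lra.
Qed.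

Lemma partial_sum_Rpower_le b N : b < 0 ->
  partial_sum (fun m => Rpower (INR (S m)) (b - 1)) N <= 1 - / b.
Proof.
  intros Hb. set (z := fun m => Rpower (INR (S m)) (b - 1)).
  assert (H : forall N, partial_sum z (S N) <= 1 + (1 - Rpower (INR (S N)) b) / (- b)).
  { induction N0 as [|N0 IH].
    - simpl. unfold z. rewrite !Rpower_1_l. replace ((1 - 1) / - b) with 0 by (field; lra). lra.
    - change (partial_sum z (S (S N0))) with (partial_sum z (S N0) + z (S N0)).
      pose proof (Rpower_succ_le_diff b (INR (S N0)) Hb
                    ltac:(rewrite S_INR; pose proof (pos_INR N0); lra)) as Hstep.
      rewrite <- S_INR in Hstep. unfold z in *.
      replace (1 + (1 - Rpower (INR (S (S N0))) b) / - b) with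
        (1 + (1 - Rpower (INR (S N0)) b) / - b
         + (Rpower (INR (S N0)) b - Rpower (INR (S (S N0))) b) / - b) by (field; lra).
      lra. }
  assert (0 < / - b) by (apply Rinv_0_lt_compat; lra).
  replace (1 - / b) with (1 + / - b) by (field; lra).
  destruct N as [|N]; [simpl; lra|].
  eapply Rle_trans; [apply H|]. pose proof (Rpower_pos (INR (S N)) b).
  unfold Rdiv. apply Rplus_le_compat_l. rewrite <- (Rmult_1_l (/ - b)) at 2.
  apply Rmult_le_compat_r; lra.
Qed.

(** * Improper integrals over (0, +oo) *)

Lemma ball_R_Rabs (x y e : R) : ball x e y <-> Rabs (y - x) < e.
Proof. reflexivity. Qed.

Lemma is_RInt_gen_of_RInt_approx (f : R -> R) l : (forall t, 0 < t -> continuous f t) ->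
  (forall eps, 0 < eps -> exists d, 0 < d /\ exists M, forall x y, 0 < x -> x < d -> M < y ->
     Rabs (RInt f x y - l) < eps) ->
  is_RInt_gen f (at_right 0) (Rbar_locally p_infty) l.
Proof.
  intros Hf Ha P [eps HP].
  destruct (Ha eps (cond_pos eps)) as [d [Hd [M HM]]].
  apply Filter_prod with (Q := fun x => 0 < x < d) (R := fun y => Rmax M d < y).
  - exists (mkposreal d Hd). intros u Hu Hpos. split; [exact Hpos|].
    pose proof (proj1 (ball_R_Rabs _ _ _) Hu) as Hu'. simpl in Hu'.
    rewrite Rminus_0_r, Rabs_right in Hu'; lra.
  - exists (Rmax M d). auto.
  - intros x y [Hx1 Hx2] Hy. pose proof (Rmax_l M d). pose proof (Rmax_r M d).
    exists (RInt f x y). split.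
    + apply (RInt_correct (V := R_CompleteNormedModule)), ex_RInt_continuous_pos; auto; lra.
    + apply HP, ball_R_Rabs, HM; lra.
Qed.

Lemma RInt_approx_of_is_RInt_gen (f : R -> R) l :
  is_RInt_gen f (at_right 0) (Rbar_locally p_infty) l ->
  forall eps, 0 < eps -> exists d, 0 < d /\ exists M, forall x y, 0 < x -> x < d -> M < y ->
     Rabs (RInt f x y - l) < eps.
Proof.
  intros H eps He.
  destruct (H (ball l (mkposreal eps He)) (locally_ball l _)) as [Q R' [d Hd] [M HM] HQR].
  exists d. split; [apply cond_pos|]. exists M. intros x y Hx Hxd Hy.
  destruct (HQR x y) as [v [Hv Hb]].
  - apply Hd; [apply ball_R_Rabs; rewrite Rminus_0_r, Rabs_right; lra | exact Hx].
  - apply HM, Hy.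
  - simpl in Hv. rewrite (is_RInt_unique _ _ _ _ Hv). exact Hb.
Qed.

Section PowerDominated.

Variables (f : R -> R) (C b : R).
Hypothesis f_cont : forall t, 0 < t -> continuous f t.
Hypothesis f_le_near_0 : forall t, 0 < t -> Rabs (f t) <= C * Rpower t b.
Hypothesis f_le_near_infty : forall t, 0 < t -> Rabs (f t) <= C * Rpower t (b - 1).
Hypothesis b_range : -1 < b < 0.
Hypothesis C_ge0 : 0 <= C.

Definition tail0 x := C * Rpower x (b + 1) / (b + 1).
Definition tail_infty y := C * Rpower y b / (- b).

Lemma abs_RInt_le_tail0 x y : 0 < x -> x <= y -> Rabs (RInt f x y) <= tail0 y.
Proof.
  intros Hx Hxy. unfold tail0.
  eapply Rle_trans; [apply (abs_RInt_le_Rpower f C b x y f_cont Hx Hxy);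
     [lra | intros t Ht; apply f_le_near_0; lra]|].
  pose proof (Rpower_pos x (b + 1)). unfold Rdiv.
  apply Rmult_le_compat_r; [left; apply Rinv_0_lt_compat; lra | nra].
Qed.

Lemma abs_RInt_le_tail_infty x y : 0 < x -> x <= y -> Rabs (RInt f x y) <= tail_infty x.
Proof.
  intros Hx Hxy. unfold tail_infty.
  eapply Rle_trans;
    [apply (abs_RInt_le_Rpower f C (b - 1) x y f_cont Hx Hxy);
     [lra | intros t Ht; apply f_le_near_infty; lra]|].
  replace (b - 1 + 1) with b by ring. pose proof (Rpower_pos y b).
  replace (C * (Rpower y b - Rpower x b) / b) with ((C * Rpower x b - C * Rpower y b) / (- b))
    by (field; lra).
  unfold Rdiv. apply Rmult_le_compat_r; [left; apply Rinv_0_lt_compat; lra | nra].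
Qed.

Lemma tail0_small eps : 0 < eps -> exists d, 0 < d /\ forall x, 0 < x -> x < d -> tail0 x < eps.
Proof.
  intros He. unfold tail0.
  destruct (Rpower_lt_near_0 (b + 1) (eps * (b + 1) / (C + 1))) as [d [Hd Hx]];
    [lra | apply Rdiv_lt_0_compat; nra|].
  exists d; split; [exact Hd|]. intros x Hx0 Hxd. specialize (Hx x Hx0 Hxd).
  pose proof (Rpower_pos x (b + 1)).
  apply Rmult_lt_compat_r with (r := C + 1) in Hx; [|lra].
  unfold Rdiv in *. rewrite Rmult_assoc, Rinv_l, Rmult_1_r in Hx by lra.
  apply Rmult_lt_reg_r with (b + 1); [lra|]. rewrite Rmult_assoc, Rinv_l, Rmult_1_r by lra.
  nra.
Qed.

Lemma tail_infty_small eps : 0 < eps -> exists M, 0 < M /\ forall y, M < y -> tail_infty y < eps.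
Proof.
  intros He. unfold tail_infty.
  destruct (Rpower_lt_near_infty b (eps * (- b) / (C + 1))) as [M [HM Hy]];
    [lra | apply Rdiv_lt_0_compat; nra|].
  exists M; split; [exact HM|]. intros y Hyd. specialize (Hy y Hyd).
  pose proof (Rpower_pos y b).
  apply Rmult_lt_compat_r with (r := C + 1) in Hy; [|lra].
  unfold Rdiv in *. rewrite Rmult_assoc, Rinv_l, Rmult_1_r in Hy by lra.
  apply Rmult_lt_reg_r with (- b); [lra|]. rewrite Rmult_assoc, Rinv_l, Rmult_1_r by lra.
  nra.
Qed.

Lemma abs_RInt_sub_le_tails x' x y y' : 0 < x' -> x' <= x -> x <= y -> y <= y' ->
  Rabs (RInt f x' y' - RInt f x y) <= tail0 x + tail_infty y.
Proof.
  intros H1 H2 H3 H4.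
  rewrite (RInt_Chasles_pos f x' x y'), (RInt_Chasles_pos f x y y') by (auto; lra).
  replace (RInt f x' x + (RInt f x y + RInt f y y') - RInt f x y)
    with (RInt f x' x + RInt f y y') by ring.
  eapply Rle_trans; [apply Rabs_triang|].
  apply Rplus_le_compat; [apply abs_RInt_le_tail0 | apply abs_RInt_le_tail_infty]; lra.
Qed.

Let x_ n := / INR (S n).
Let y_ n := INR (S n).

Lemma exhaustion_bounds n : 0 < x_ n /\ x_ n <= 1 /\ 1 <= y_ n.
Proof.
  unfold x_, y_. pose proof (pos_INR n). rewrite S_INR.
  repeat split; [apply Rinv_0_lt_compat; lra | | lra].
  rewrite <- Rinv_1. apply Rinv_le_contravar; lra.
Qed.

Lemma exhaustion_monotone n m : (n <= m)%nat -> x_ m <= x_ n /\ y_ n <= y_ m.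
Proof.
  intros Hnm. unfold x_, y_. assert (INR (S n) <= INR (S m)) by (apply le_INR; lia).
  split; [apply Rinv_le_contravar; [apply lt_0_INR; lia | exact H] | exact H].
Qed.

Lemma exhaustion_tails_small eps : 0 < eps ->
  exists N, forall n, (N <= n)%nat -> tail0 (x_ n) + tail_infty (y_ n) < eps.
Proof.
  intros He.
  destruct (tail0_small (eps / 2)) as [d [Hd Hd']]; [lra|].
  destruct (tail_infty_small (eps / 2)) as [M [HM HM']]; [lra|].
  destruct (INR_unbounded (Rmax (/ d) M)) as [N HN].
  exists N. intros n Hn. pose proof (Rmax_l (/ d) M). pose proof (Rmax_r (/ d) M).
  assert (INR N <= INR n) by (apply le_INR, Hn).
  assert (Hy : INR n < y_ n) by (unfold y_; rewrite S_INR; lra).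
  assert (Hx : x_ n < d).
  { unfold x_. rewrite <- (Rinv_inv d). apply Rinv_lt_contravar; [|fold (y_ n); lra].
    apply Rmult_lt_0_compat; [apply Rinv_0_lt_compat, Hd | apply lt_0_INR; lia]. }
  pose proof (Hd' (x_ n) (proj1 (exhaustion_bounds n)) Hx). pose proof (HM' (y_ n) ltac:(lra)).
  lra.
Qed.

Lemma exhaustion_Cauchy : Cauchy_crit (fun n => RInt f (x_ n) (y_ n)).
Proof.
  intros eps He. destruct (exhaustion_tails_small eps He) as [N HN]. exists N.
  intros n m Hn Hm. unfold R_dist.
  destruct (Nat.le_ge_cases n m) as [Hnm | Hnm].
  - destruct (exhaustion_monotone n m Hnm).
    pose proof (exhaustion_bounds n). pose proof (exhaustion_bounds m).
    rewrite Rabs_minus_sym. eapply Rle_lt_trans; [apply abs_RInt_sub_le_tails; lra | apply HN, Hn].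
  - destruct (exhaustion_monotone m n Hnm).
    pose proof (exhaustion_bounds n). pose proof (exhaustion_bounds m).
    eapply Rle_lt_trans; [apply abs_RInt_sub_le_tails; lra | apply HN, Hm].
Qed.

Lemma is_RInt_gen_tails : exists I, is_RInt_gen f (at_right 0) (Rbar_locally p_infty) I /\
  forall x y, 0 < x -> x <= y -> Rabs (I - RInt f x y) <= tail0 x + tail_infty y.
Proof.
  destruct (Rcomplete.R_complete _ exhaustion_Cauchy) as [l Hl].
  assert (Hbound : forall x y, 0 < x -> x <= y -> Rabs (l - RInt f x y) <= tail0 x + tail_infty y).
  { intros x y Hx Hxy. apply Rle_plus_epsilon. intros eps He.
    destruct (Hl eps He) as [N1 HN1].
    destruct (INR_unbounded (Rmax (/ x) y)) as [N2 HN2].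
    set (n := max N1 N2).
    pose proof (Rmax_l (/ x) y). pose proof (Rmax_r (/ x) y).
    assert (INR N2 <= INR n) by (apply le_INR; lia).
    assert (Hy : INR n < y_ n) by (unfold y_; rewrite S_INR; lra).
    assert (Hx' : x_ n <= x).
    { unfold x_. rewrite <- (Rinv_inv x). apply Rinv_le_contravar; [apply Rinv_0_lt_compat, Hx|].
      fold (y_ n). lra. }
    specialize (HN1 n ltac:(lia)). unfold R_dist in HN1.
    pose proof (abs_RInt_sub_le_tails (x_ n) x y (y_ n) (proj1 (exhaustion_bounds n)) Hx' Hxy ltac:(lra)).
    replace (l - RInt f x y)
      with ((RInt f (x_ n) (y_ n) - RInt f x y) - (RInt f (x_ n) (y_ n) - l)) by ring.
    eapply Rle_trans; [apply Rabs_triang|]. rewrite Rabs_Ropp. lra. }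
  exists l. split; [|exact Hbound].
  apply is_RInt_gen_of_RInt_approx; [exact f_cont|]. intros eps He.
  destruct (tail0_small (eps / 2)) as [d [Hd Hd']]; [lra|].
  destruct (tail_infty_small (eps / 2)) as [M [HM HM']]; [lra|].
  exists (Rmin d 1). split; [apply Rmin_pos; lra|]. exists (Rmax M 1).
  intros x y Hx Hxd Hy. pose proof (Rmin_l d 1). pose proof (Rmin_r d 1).
  pose proof (Rmax_l M 1). pose proof (Rmax_r M 1).
  rewrite Rabs_minus_sym. eapply Rle_lt_trans; [apply Hbound; lra|].
  specialize (Hd' x Hx ltac:(lra)). specialize (HM' y ltac:(lra)). lra.
Qed.

(** * Riemann sums *)

Variables (df : R -> R) (I : R).
Hypothesis f_derive : forall t, 0 < t -> is_derive f t (df t).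
Hypothesis df_le : forall t, 0 < t -> Rabs (df t) <= C * Rpower t (b - 1).
Hypothesis I_tails : forall x y, 0 < x -> x <= y -> Rabs (I - RInt f x y) <= tail0 x + tail_infty y.

Let zeta_term m := Rpower (INR (S m)) (b - 1).
Let riemann_term h n := h * f (INR (S n) * h).

Lemma Riemann_step_error h u : 0 < h -> 1 <= u ->
  Rabs (h * f ((u + 1) * h) - RInt f (u * h) ((u + 1) * h))
  <= C * Rpower h (b + 1) * Rpower u (b - 1).
Proof.
  intros Hh Hu. set (x1 := u * h). set (x2 := (u + 1) * h).
  assert (Hx1 : 0 < x1) by (unfold x1; nra). assert (Hx12 : x2 - x1 = h) by (unfold x1, x2; ring).
  assert (E : h * f x2 - RInt f x1 x2 = RInt (fun t => f x2 - f t) x1 x2).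
  { symmetry. apply is_RInt_unique.
    replace (h * f x2 - RInt f x1 x2) with (minus (scal (x2 - x1) (f x2)) (RInt f x1 x2))
      by (rewrite Hx12; reflexivity).
    apply (is_RInt_minus _ _ _ _ _ _ (is_RInt_const x1 x2 (f x2))).
    apply (RInt_correct (V := R_CompleteNormedModule)), ex_RInt_continuous_pos; auto; lra. }
  rewrite E.
  eapply Rle_trans.
  { apply (abs_RInt_le_const _ x1 x2 (h * (C * Rpower x1 (b - 1)))); [lra| |].
    - apply ex_RInt_continuous_pos; [|exact Hx1 | lra]. intros t Ht.
      apply (continuous_minus (fun _ => f x2) f); [apply continuous_const | apply f_cont, Ht].
    - intros t Ht. destruct (Req_dec t x2) as [-> | Hne].
      + rewrite Rminus_diag, Rabs_R0.
        apply Rmult_le_pos; [lra | apply Rmult_le_pos; [exact C_ge0 | left; apply Rpower_pos]].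
      + destruct (MVT_gen f t x2 df) as [c [Hc1 Hc2]].
        * intros x Hx. rewrite Rmin_left, Rmax_right in Hx by lra. apply f_derive; lra.
        * intros x Hx. rewrite Rmin_left, Rmax_right in Hx by lra.
          apply continuity_pt_filterlim, f_cont; lra.
        * rewrite Rmin_left, Rmax_right in Hc1 by lra. rewrite Hc2, Rabs_mult.
          assert (Rabs (df c) <= C * Rpower x1 (b - 1)).
          { eapply Rle_trans; [apply df_le; lra|].
            apply Rmult_le_compat_l; [exact C_ge0 | apply Rle_Rpower_l_neg; lra]. }
          rewrite (Rabs_right (x2 - t)) by lra. pose proof (Rabs_pos (df c)). nra. }
  rewrite Hx12. unfold x1. rewrite <- Rpower_mult_distr, Rpower_add_1 by lra. nra.
Qed.

Lemma Riemann_partial_sum_error h N : 0 < h ->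
  Rabs (partial_sum (riemann_term h) (S N) - h * f h - RInt f h (INR (S N) * h))
  <= C * Rpower h (b + 1) * partial_sum zeta_term N.
Proof.
  intros Hh. induction N as [|N IH].
  - simpl. unfold riemann_term. rewrite !Rmult_1_l, RInt_point.
    change (@zero R_CompleteNormedModule) with 0.
    replace (0 + h * f h - h * f h - 0) with 0 by ring. rewrite Rabs_R0. lra.
  - change (partial_sum (riemann_term h) (S (S N)))
      with (partial_sum (riemann_term h) (S N) + riemann_term h (S N)).
    change (partial_sum zeta_term (S N)) with (partial_sum zeta_term N + zeta_term N).
    assert (HN1 : 1 <= INR (S N)) by (rewrite S_INR; pose proof (pos_INR N); lra).
    rewrite (RInt_Chasles_pos f h (INR (S N) * h) (INR (S (S N)) * h))
      by (auto; try nra; rewrite (S_INR (S N)); nra).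
    pose proof (Riemann_step_error h (INR (S N)) Hh HN1) as Hstep.
    rewrite <- S_INR in Hstep. unfold riemann_term at 2. unfold zeta_term at 2.
    match goal with |- Rabs ?e <= _ =>
      replace e with ((partial_sum (riemann_term h) (S N) - h * f h - RInt f h (INR (S N) * h))
        + (h * f (INR (S (S N)) * h) - RInt f (INR (S N) * h) (INR (S (S N)) * h))) by ring end.
    eapply Rle_trans; [apply Rabs_triang | lra].
Qed.

Lemma riemann_term_le h n : 0 < h -> Rabs (riemann_term h n) <= C * Rpower h b * zeta_term n.
Proof.
  intros Hh. unfold riemann_term, zeta_term. pose proof (lt_0_INR (S n) ltac:(lia)).
  rewrite Rabs_mult, Rabs_right by lra.
  pose proof (f_le_near_infty (INR (S n) * h) ltac:(nra)) as Hf.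
  rewrite <- Rpower_mult_distr in Hf by lra. rewrite (Rpower_sub_1 h b) by exact Hh.
  pose proof (Rpower_pos (INR (S n)) (b - 1)). pose proof (Rpower_pos h (b - 1)). nra.
Qed.

Lemma riemann_term_div_le h n : 0 < h ->
  Rabs (riemann_term h n / INR (S n)) <= C * Rpower h (b + 1) * zeta_term n.
Proof.
  intros Hh. unfold riemann_term, zeta_term. pose proof (lt_0_INR (S n) ltac:(lia)).
  replace (h * f (INR (S n) * h) / INR (S n)) with ((h / INR (S n)) * f (INR (S n) * h))
    by (field; lra).
  rewrite Rabs_mult, (Rabs_right (h / INR (S n))) by (left; apply Rdiv_lt_0_compat; lra).
  pose proof (f_le_near_0 (INR (S n) * h) ltac:(nra)) as Hf.
  rewrite <- Rpower_mult_distr, (Rpower_sub_1 (INR (S n)) b) in Hf by lra.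
  apply Rle_trans with (h / INR (S n) * (C * (INR (S n) * Rpower (INR (S n)) (b - 1) * Rpower h b))).
  - apply Rmult_le_compat_l; [left; apply Rdiv_lt_0_compat; lra | exact Hf].
  - right. rewrite (Rpower_add_1 h b), (Rpower_sub_1 h b) by exact Hh. field. lra.
Qed.

Lemma ex_series_zeta_term : ex_series zeta_term.
Proof.
  apply (ex_series_bounded_nonneg zeta_term (1 - / b)).
  - intros n. left; apply Rpower_pos.
  - intros N. apply partial_sum_Rpower_le. lra.
Qed.

Lemma Riemann_weighted_sum_bound h : 0 < h ->
  exists E, is_series (fun n => riemann_term h n / INR (S n)) E /\
    Rabs E <= C * (1 - / b) * Rpower h (b + 1).
Proof.
  intros Hh. destruct ex_series_zeta_term as [Z HZ].
  destruct (ex_series_le (fun n => riemann_term h n / INR (S n))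
              (fun n => C * Rpower h (b + 1) * zeta_term n)) as [E HE].
  { intros n. apply riemann_term_div_le, Hh. }
  { exists (C * Rpower h (b + 1) * Z). apply (is_series_scal_l _ _ _ HZ). }
  exists E. split; [exact HE|].
  apply (Rabs_lim_le (partial_sum (fun n => riemann_term h n / INR (S n))));
    [apply is_lim_seq_partial_sum, HE|].
  intros N. eapply Rle_trans; [apply Rabs_partial_sum_le|].
  eapply Rle_trans;
    [apply (partial_sum_le _ (fun n => C * Rpower h (b + 1) * zeta_term n));
     intros n; apply riemann_term_div_le, Hh|].
  rewrite partial_sum_scal. pose proof (Rpower_pos h (b + 1)).
  replace (C * (1 - / b) * Rpower h (b + 1)) with (C * Rpower h (b + 1) * (1 - / b)) by ring.
  apply Rmult_le_compat_l; [apply Rmult_le_pos; lra | apply partial_sum_Rpower_le; lra].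
Qed.

Lemma riemann_boundary_le h : 0 < h -> Rabs (h * f h) <= C * Rpower h (b + 1).
Proof.
  intros Hh. rewrite Rabs_mult, Rabs_right by lra. pose proof (f_le_near_0 h Hh) as Hf.
  rewrite (Rpower_add_1 h b) by exact Hh. rewrite (Rpower_sub_1 h b) in Hf by exact Hh. nra.
Qed.

(* The partial sums are compared with [RInt f h (N h)] (by the step estimate) and the latter
   with [I] (by the tail bounds); the boundary term [h f h] is of the same order. *)
Lemma Riemann_sum_error h : 0 < h ->
  exists Sh, is_series (riemann_term h) Sh /\
    Rabs (Sh - I) <= C * (2 - / b + / (b + 1)) * Rpower h (b + 1).
Proof.
  intros Hh. destruct ex_series_zeta_term as [Z HZ].
  destruct (ex_series_le (riemann_term h) (fun n => C * Rpower h b * zeta_term n)) as [Sh HS].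
  { intros n. apply riemann_term_le, Hh. }
  { exists (C * Rpower h b * Z). apply (is_series_scal_l _ _ _ HZ). }
  exists Sh. split; [exact HS|].
  apply Rle_plus_epsilon. intros eps Heps.
  apply is_lim_seq_partial_sum, is_lim_seq_spec in HS.
  destruct (HS (mkposreal (eps / 2) ltac:(lra))) as [N1 HN1].
  destruct (tail_infty_small (eps / 2)) as [M [HM HM']]; [lra|].
  destruct (INR_unbounded (M / h)) as [N2 HN2].
  set (N := max N1 N2).
  specialize (HN1 (S N) ltac:(lia)). cbn [pos] in HN1.
  assert (HNh : M < INR (S N) * h).
  { assert (INR N2 <= INR (S N)) by (apply le_INR; lia).
    apply Rmult_lt_reg_r with (/ h); [apply Rinv_0_lt_compat, Hh|].
    rewrite Rmult_assoc, Rinv_r, Rmult_1_r by lra. unfold Rdiv in HN2. lra. }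
  specialize (HM' _ HNh).
  pose proof (Riemann_partial_sum_error h N Hh) as Hpart.
  pose proof (partial_sum_Rpower_le b N ltac:(lra)).
  assert (Hx : h <= INR (S N) * h)
    by (rewrite <- (Rmult_1_l h) at 1; apply Rmult_le_compat_r;
        [lra | rewrite S_INR; pose proof (pos_INR N); lra]).
  pose proof (I_tails h (INR (S N) * h) Hh Hx) as HI. unfold tail0 in HI.
  pose proof (riemann_boundary_le h Hh) as Hfh.
  assert (Hzeta : C * Rpower h (b + 1) * partial_sum zeta_term N <= C * Rpower h (b + 1) * (1 - / b)).
  { apply Rmult_le_compat_l; [pose proof (Rpower_pos h (b + 1)); nra | assumption]. }
  replace (Sh - I) with ((partial_sum (riemann_term h) (S N) - h * f h - RInt f h (INR (S N) * h))
    + h * f h - (I - RInt f h (INR (S N) * h)) - (partial_sum (riemann_term h) (S N) - Sh)) by ring.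
  eapply Rle_trans; [apply Rabs_triang|]. rewrite Rabs_Ropp.
  eapply Rle_trans; [apply Rplus_le_compat_r, Rabs_triang|].
  eapply Rle_trans; [apply Rplus_le_compat_r, Rplus_le_compat_l; rewrite Rabs_Ropp; apply HI|].
  eapply Rle_trans; [apply Rplus_le_compat_r, Rplus_le_compat_r, Rabs_triang|].
  replace (C * (2 - / b + / (b + 1)) * Rpower h (b + 1)) with
    (C * Rpower h (b + 1) * (1 - / b) + C * Rpower h (b + 1) + C * Rpower h (b + 1) / (b + 1))
    by (field; lra).
  unfold tail_infty in *. lra.
Qed.

End PowerDominated.

Definition log_gauss (a : R) (s : nat) (t : R) : R := Rpower t a * exp (- 2 * t ^ 2) * ln t ^ s.

Definition log_gauss' (a : R) (s : nat) (t : R) : R :=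
  Rpower t (a - 1) * exp (- 2 * t ^ 2) * ((a - 4 * t ^ 2) * ln t ^ s + INR s * ln t ^ pred s).

Lemma is_derive_log_gauss a s t : 0 < t -> is_derive (log_gauss a s) t (log_gauss' a s t).
Proof.
  intros Ht. unfold log_gauss, log_gauss', Rpower. auto_derive; [lra|].
  replace ((a - 1) * ln t) with (a * ln t + - ln t) by ring.
  rewrite exp_plus, exp_Ropp, exp_ln by exact Ht.
  replace (t * (t * 1)) with (t ^ 2) by ring.
  match goal with |- ?x = ?y => change (x = y :> R) end. field. lra.
Qed.

Lemma continuous_log_gauss a s t : 0 < t -> continuous (log_gauss a s) t.
Proof. intros Ht. continuous_by_derive. eexists. apply is_derive_log_gauss, Ht. Qed.

Lemma gauss_weight_le a c m n : 0 < c -> exists M, 0 <= M /\ forall t, 0 < t ->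
  Rpower t a * Rabs (ln t) ^ m * t ^ n * exp (- 2 * t ^ 2) <= M * Rpower t (a - c).
Proof.
  intros Hc. destruct (Rpower_ln_gauss_bounded c m n Hc) as [M HM].
  exists (Rabs M). split; [apply Rabs_pos|]. intros t Ht.
  replace a with (c + (a - c)) at 1 by ring. rewrite Rpower_plus.
  pose proof (Rpower_pos t (a - c)). pose proof (HM t Ht). pose proof (Rle_abs M).
  replace (Rpower t c * Rpower t (a - c) * Rabs (ln t) ^ m * t ^ n * exp (- 2 * t ^ 2))
    with ((Rpower t c * Rabs (ln t) ^ m * t ^ n * exp (- 2 * t ^ 2)) * Rpower t (a - c)) by ring.
  apply Rmult_le_compat_r; lra.
Qed.

Lemma Rabs_log_gauss a s t : 0 < t ->
  Rabs (log_gauss a s t) = Rpower t a * Rabs (ln t) ^ s * t ^ 0 * exp (- 2 * t ^ 2).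
Proof.
  intros Ht. unfold log_gauss. rewrite !Rabs_mult, <- RPow_abs, (Rabs_right (Rpower t a)),
    (Rabs_right (exp _)) by (left; first [apply Rpower_pos | apply exp_pos]). simpl. ring.
Qed.

Lemma log_gauss_le a s c : 0 < c -> exists C, 0 <= C /\ forall t, 0 < t ->
  Rabs (log_gauss a s t) <= C * Rpower t (a - c).
Proof.
  intros Hc. destruct (gauss_weight_le a c s 0 Hc) as [M [HM0 HM]].
  exists M. split; [exact HM0|]. intros t Ht. rewrite Rabs_log_gauss by exact Ht. apply HM, Ht.
Qed.

Lemma log_gauss_le_pred a s c : 0 < c -> exists C, 0 <= C /\ forall t, 0 < t ->
  Rabs (log_gauss a s t) <= C * Rpower t (a - c - 1).
Proof.
  intros Hc. destruct (gauss_weight_le a c s 1 Hc) as [M [HM0 HM]].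
  exists M. split; [exact HM0|]. intros t Ht. rewrite Rabs_log_gauss by exact Ht.
  specialize (HM t Ht). rewrite (Rpower_sub_1 t (a - c)) in HM by exact Ht.
  pose proof (Rpower_pos t (a - c - 1)). rewrite pow_1 in HM. rewrite pow_O.
  apply Rmult_le_reg_r with t; [exact Ht|]. nra.
Qed.

Lemma log_gauss'_le a s c : 0 < c -> exists C, 0 <= C /\ forall t, 0 < t ->
  Rabs (log_gauss' a s t) <= C * Rpower t (a - c - 1).
Proof.
  intros Hc.
  destruct (gauss_weight_le (a - 1) c s 0 Hc) as [M0 [HM0 H0]].
  destruct (gauss_weight_le (a - 1) c s 2 Hc) as [M2 [HM2 H2]].
  destruct (gauss_weight_le (a - 1) c (pred s) 0 Hc) as [M3 [HM3 H3]].
  exists (Rabs a * M0 + 4 * M2 + INR s * M3).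
  split; [pose proof (Rabs_pos a); pose proof (pos_INR s); nra|]. intros t Ht.
  specialize (H0 t Ht). specialize (H2 t Ht). specialize (H3 t Ht).
  replace (a - c - 1) with (a - 1 - c) by ring. rewrite pow_O in H0, H3.
  set (P := Rpower t (a - 1)) in *. set (E := exp (- 2 * t ^ 2)) in *.
  set (L := ln t) in *. set (Q := Rpower t (a - 1 - c)) in *.
  assert (HP : 0 < P) by apply Rpower_pos. assert (HE : 0 < E) by apply exp_pos.
  assert (Htri : Rabs ((a - 4 * t ^ 2) * L ^ s + INR s * L ^ pred s) <=
     Rabs a * Rabs L ^ s + 4 * t ^ 2 * Rabs L ^ s + INR s * Rabs L ^ pred s).
  { eapply Rle_trans; [apply Rabs_triang|].
    rewrite !Rabs_mult, <- !RPow_abs, (Rabs_right (INR s)) by (apply Rle_ge, pos_INR).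
    apply Rplus_le_compat_r.
    assert (Rabs (a - 4 * t ^ 2) <= Rabs a + 4 * t ^ 2).
    { eapply Rle_trans; [apply Rabs_triang|]. rewrite Rabs_Ropp, (Rabs_right (4 * t ^ 2)) by nra. lra. }
    pose proof (pow_le (Rabs L) s (Rabs_pos L)). nra. }
  unfold log_gauss'. fold P E L.
  rewrite Rabs_mult, (Rabs_mult P), (Rabs_right P), (Rabs_right E) by lra.
  apply Rle_trans with (P * E * (Rabs a * Rabs L ^ s + 4 * t ^ 2 * Rabs L ^ s + INR s * Rabs L ^ pred s)).
  - apply Rmult_le_compat_l; [nra | exact Htri].
  - pose proof (Rabs_pos a). pose proof (pos_INR s).
    assert (Rabs a * (P * Rabs L ^ s * E) <= Rabs a * (M0 * Q)) by (apply Rmult_le_compat_l; lra).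
    assert (INR s * (P * Rabs L ^ pred s * E) <= INR s * (M3 * Q)) by (apply Rmult_le_compat_l; lra).
    nra.
Qed.

(* [b = min ((a-1)/2, -1/2)] lies in [(-1, 0)] and leaves room [a - b > 0] for the logarithm. *)
Lemma log_gauss_dominated a s : -1 < a -> exists C b, -1 < b < 0 /\ 0 <= C /\
  (forall t, 0 < t -> Rabs (log_gauss a s t) <= C * Rpower t b) /\
  (forall t, 0 < t -> Rabs (log_gauss a s t) <= C * Rpower t (b - 1)) /\
  (forall t, 0 < t -> Rabs (log_gauss' a s t) <= C * Rpower t (b - 1)).
Proof.
  intros Ha. set (b := Rmin ((a - 1) / 2) (- 1 / 2)).
  assert (Hb : -1 < b < 0) by (unfold b, Rmin; destruct (Rle_dec ((a - 1) / 2) (- 1 / 2)); lra).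
  assert (Hc : 0 < a - b) by (unfold b, Rmin; destruct (Rle_dec ((a - 1) / 2) (- 1 / 2)); lra).
  destruct (log_gauss_le a s (a - b) Hc) as [C1 [HC1 H1]].
  destruct (log_gauss_le_pred a s (a - b) Hc) as [C2 [HC2 H2]].
  destruct (log_gauss'_le a s (a - b) Hc) as [C3 [HC3 H3]].
  replace (a - (a - b)) with b in H1 by ring.
  replace (a - (a - b) - 1) with (b - 1) in H2, H3 by ring.
  exists (C1 + C2 + C3), b. repeat split; try lra; intros t Ht;
    pose proof (Rpower_pos t b); pose proof (Rpower_pos t (b - 1));
    [specialize (H1 t Ht) | specialize (H2 t Ht) | specialize (H3 t Ht)]; nra.
Qed.

Lemma log_gauss_Riemann a s : -1 < a -> exists I K g, 0 < g /\ 0 <= K /\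
  is_RInt_gen (log_gauss a s) (at_right 0) (Rbar_locally p_infty) I /\
  forall h, 0 < h -> exists Sh E, is_series (fun n => h * log_gauss a s (INR (S n) * h)) Sh /\
    is_series (fun n => h * log_gauss a s (INR (S n) * h) / INR (S n)) E /\
    Rabs (Sh - I) <= K * Rpower h g /\ Rabs E <= K * Rpower h g.
Proof.
  intros Ha. destruct (log_gauss_dominated a s Ha) as [C [b [Hb [HC [H0 [Hinf Hd]]]]]].
  pose proof (continuous_log_gauss a s) as Hcont.
  destruct (is_RInt_gen_tails (log_gauss a s) C b Hcont H0 Hinf Hb HC) as [I [HI HIb]].
  assert (Hb1 : 0 < / (b + 1)) by (apply Rinv_0_lt_compat; lra).
  assert (Hb2 : 0 < - / b) by (rewrite <- Rinv_opp; apply Rinv_0_lt_compat; lra).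
  exists I, (C * (2 - / b + / (b + 1))), (b + 1).
  split; [lra|]. split; [apply Rmult_le_pos; lra|]. split; [exact HI|]. intros h Hh.
  destruct (Riemann_sum_error (log_gauss a s) C b Hcont H0 Hinf Hb HC (log_gauss' a s) I
              (is_derive_log_gauss a s) Hd HIb h Hh) as [Sh [HS HSb]].
  destruct (Riemann_weighted_sum_bound (log_gauss a s) C b H0 Hb HC h Hh) as [E [HE HEb]].
  exists Sh, E. repeat split; [exact HS | exact HE | exact HSb|].
  eapply Rle_trans; [exact HEb|]. apply Rmult_le_compat_r; [left; apply Rpower_pos|].
  apply Rmult_le_compat_l; lra.
Qed.

Definition gamma_integrand (x t : R) : R := Rpower t (x - 1) * exp (- t).

Lemma continuous_gamma_integrand x t : 0 < t -> continuous (gamma_integrand x) t.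
Proof. intros Ht. continuous_by_derive. unfold gamma_integrand, Rpower. auto_derive. lra. Qed.

Lemma RInt_gamma_integrand_subst x u v : 0 < u -> 0 < v ->
  RInt (gamma_integrand x) (2 * u ^ 2) (2 * v ^ 2)
  = Rpower 2 (x + 1) * RInt (log_gauss (2 * x - 1) 0) u v.
Proof.
  intros Hu Hv. assert (Hm : 0 < Rmin u v) by (apply Rmin_pos; assumption).
  assert (Hsubst : is_RInt (fun y => Rpower 2 (x + 1) * log_gauss (2 * x - 1) 0 y) u v
                     (RInt (gamma_integrand x) (2 * u ^ 2) (2 * v ^ 2))).
  { eapply is_RInt_ext;
      [|apply (is_RInt_comp (V := R_CompleteNormedModule) (gamma_integrand x)
                 (fun t => 2 * t ^ 2) (fun t => 4 * t) u v)].
    - intros y Hy. assert (Hy0 : 0 < y) by lra.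
      unfold scal; simpl; unfold mult; simpl. unfold gamma_integrand, log_gauss, Rpower. simpl.
      rewrite ln_mult by nra. replace (y * (y * 1)) with (y ^ 2) by ring.
      rewrite ln_pow by exact Hy0.
      replace (4 * y) with (exp (ln 2 + ln 2 + ln y)) by (rewrite !exp_plus, !exp_ln by lra; ring).
      rewrite <- !exp_plus, Rmult_1_r, <- exp_plus. f_equal. simpl. ring.
    - intros z Hz. apply continuous_gamma_integrand. assert (0 < z) by lra. nra.
    - intros z Hz. split; [auto_derive; [exact I | ring]|].
      continuous_by_derive. auto_derive. exact I. }
  rewrite <- (is_RInt_unique _ _ _ _ Hsubst). apply is_RInt_unique.
  apply (is_RInt_scal (V := R_NormedModule)), (RInt_correct (V := R_CompleteNormedModule)).
  apply (ex_RInt_continuous (V := R_CompleteNormedModule)).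
  intros z Hz. apply continuous_log_gauss. lra.
Qed.

Lemma is_RInt_gen_gamma_integrand x I0 :
  is_RInt_gen (log_gauss (2 * x - 1) 0) (at_right 0) (Rbar_locally p_infty) I0 ->
  is_RInt_gen (gamma_integrand x) (at_right 0) (Rbar_locally p_infty) (Rpower 2 (x + 1) * I0).
Proof.
  intros H. apply is_RInt_gen_of_RInt_approx; [intros; apply continuous_gamma_integrand; assumption|].
  intros eps He. set (c := Rpower 2 (x + 1)). assert (Hc : 0 < c) by apply Rpower_pos.
  destruct (RInt_approx_of_is_RInt_gen _ _ H (eps / c)) as [d [Hd [M HM]]];
    [apply Rdiv_lt_0_compat; assumption|].
  exists (2 * d ^ 2). split; [nra|]. exists (2 * Rabs M ^ 2).
  intros u v Hu Hud Hv.
  assert (Hv0 : 0 < v) by (pose proof (pow2_ge_0 (Rabs M)); nra).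
  set (u' := sqrt (u / 2)). set (v' := sqrt (v / 2)).
  assert (Hu' : 0 < u') by (apply sqrt_lt_R0; lra).
  assert (Hv' : 0 < v') by (apply sqrt_lt_R0; lra).
  assert (Eu : 2 * u' ^ 2 = u) by (unfold u'; rewrite <- Rsqr_pow2, Rsqr_sqrt; lra).
  assert (Ev : 2 * v' ^ 2 = v) by (unfold v'; rewrite <- Rsqr_pow2, Rsqr_sqrt; lra).
  assert (Hud' : u' < d).
  { unfold u'. rewrite <- (sqrt_pow2 d) by lra. apply sqrt_lt_1; first [lra | apply pow2_ge_0]. }
  assert (HMv : M < v').
  { apply Rle_lt_trans with (Rabs M); [apply Rle_abs|].
    unfold v'. rewrite <- (sqrt_pow2 (Rabs M)) by apply Rabs_pos.
    apply sqrt_lt_1; first [lra | apply pow2_ge_0]. }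
  rewrite <- Eu, <- Ev, RInt_gamma_integrand_subst by assumption. fold c.
  specialize (HM u' v' Hu' Hud' HMv).
  replace (c * RInt (log_gauss (2 * x - 1) 0) u' v' - c * I0)
    with (c * (RInt (log_gauss (2 * x - 1) 0) u' v' - I0)) by ring.
  rewrite Rabs_mult, (Rabs_right c) by lra.
  apply Rmult_lt_compat_l with (r := c) in HM; [|exact Hc].
  replace (c * (eps / c)) with eps in HM by (field; lra). exact HM.
Qed.

Lemma log_gauss_0_pos a t : 0 < t -> 0 < log_gauss a 0 t.
Proof. intros Ht. unfold log_gauss. rewrite pow_O, Rmult_1_r. apply Rmult_lt_0_compat; apply exp_pos. Qed.

(* The integral over [[1, 2]] already exceeds [m], and the rest is nonnegative. *)
Lemma is_RInt_gen_log_gauss_0_pos a I0 :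
  is_RInt_gen (log_gauss a 0) (at_right 0) (Rbar_locally p_infty) I0 -> 0 < I0.
Proof.
  intros H. set (m := exp (- Rabs a * ln 2) * exp (- 8)).
  assert (Hm : 0 < m) by (apply Rmult_lt_0_compat; apply exp_pos).
  assert (Hc : forall t, 0 < t -> continuous (log_gauss a 0) t)
    by (intros; apply continuous_log_gauss; assumption).
  assert (H12 : m <= RInt (log_gauss a 0) 1 2).
  { apply Rle_trans with (RInt (fun _ => m) 1 2).
    { rewrite RInt_const. unfold scal; simpl; unfold mult; simpl. lra. }
    apply RInt_le; [lra | apply ex_RInt_const | apply ex_RInt_continuous_pos; auto; lra|].
    intros t Ht. unfold log_gauss, m, Rpower. rewrite pow_O, Rmult_1_r.
    assert (0 <= ln t) by (rewrite <- ln_1; apply ln_le; lra).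
    assert (ln t <= ln 2) by (apply ln_le; lra).
    apply Rmult_le_compat; try (left; apply exp_pos); apply exp_le_compat; [|nra].
    destruct (Rle_or_lt 0 a); [rewrite Rabs_right | rewrite Rabs_left]; nra. }
  destruct (RInt_approx_of_is_RInt_gen _ _ H (m / 2)) as [d [Hd [M HM]]]; [lra|].
  set (x := Rmin (d / 2) 1). set (y := Rmax (M + 1) 2).
  assert (Hx : 0 < x) by (apply Rmin_pos; lra).
  assert (Hxd : x < d) by (unfold x; pose proof (Rmin_l (d / 2) 1); lra).
  assert (Hx1 : x <= 1) by apply Rmin_r.
  assert (Hy : M < y) by (unfold y; pose proof (Rmax_l (M + 1) 2); lra).
  assert (Hy2 : 2 <= y) by apply Rmax_r.
  specialize (HM x y Hx Hxd Hy).
  rewrite (RInt_Chasles_pos _ x 1 y), (RInt_Chasles_pos _ 1 2 y) in HM by (auto; lra).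
  assert (0 <= RInt (log_gauss a 0) x 1)
    by (apply RInt_ge_0; [exact Hx1 | apply ex_RInt_continuous_pos; auto |
                          intros t Ht; left; apply log_gauss_0_pos; lra]).
  assert (0 <= RInt (log_gauss a 0) 2 y)
    by (apply RInt_ge_0; [exact Hy2 | apply ex_RInt_continuous_pos; auto; lra |
                          intros t Ht; left; apply log_gauss_0_pos; lra]).
  unfold Rabs in HM. destruct (Rcase_abs _) in HM; lra.
Qed.

(** * Termwise differentiation of Dirichlet series *)

Definition dirichlet_log (A : nat -> R) (k : nat) (al : R) : R :=
  Series (fun n => A n * ln (INR (S n)) ^ k * Rpower (INR (S n)) (- al)).

Section Dirichlet.

Variable A : nat -> R.
Hypothesis A_nonneg : forall n, 0 <= A n.
Hypothesis A_summable : forall r, 0 <= r -> ex_series (fun n => A n * Rpower (INR (S n)) r).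

Lemma dirichlet_log_term_le n k y r : Rabs y <= r ->
  Rabs (A n * ln (INR (S n)) ^ k * Rpower (INR (S n)) (- y)) <= A n * Rpower (INR (S n)) (INR k + r).
Proof.
  intros Hy. set (l := INR (S n)).
  assert (Hl : 1 <= l) by (unfold l; rewrite S_INR; pose proof (pos_INR n); lra).
  assert (H0 : 0 <= ln l) by (rewrite <- ln_1; apply ln_le; lra).
  assert (H1 : ln l <= l) by (pose proof (ln_le_sub_1 l ltac:(lra)); lra).
  pose proof (A_nonneg n).
  rewrite !Rabs_mult, (Rabs_right (A n)), (Rabs_right (Rpower _ _)), <- RPow_abs, (Rabs_right (ln l))
    by (first [lra | left; apply Rpower_pos]).
  rewrite Rpower_plus, Rpower_pow, Rmult_assoc by lra.
  apply Rmult_le_compat_l; [lra|].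
  apply Rmult_le_compat; [apply pow_le; lra | left; apply Rpower_pos | apply pow_incr; lra|].
  apply Rle_Rpower; [lra|]. pose proof (Rle_abs (- y)). rewrite Rabs_Ropp in *. lra.
Qed.

Lemma ex_series_dirichlet_log k y :
  ex_series (fun n => A n * ln (INR (S n)) ^ k * Rpower (INR (S n)) (- y)).
Proof.
  apply (ex_series_le (K := R_AbsRing) (V := R_CompleteNormedModule) _
           (fun n => A n * Rpower (INR (S n)) (INR k + Rabs y))).
  - intros n. apply dirichlet_log_term_le. lra.
  - apply A_summable. pose proof (pos_INR k); pose proof (Rabs_pos y); lra.
Qed.

Lemma derivable_pt_lim_SP (u du : nat -> R -> R) x :
  (forall n, derivable_pt_lim (u n) x (du n x)) -> forall N, derivable_pt_lim (SP u N) x (SP du N x).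
Proof.
  intros H N. unfold SP. induction N as [|N IH]; simpl; [apply H|].
  apply (derivable_pt_lim_plus (fun y => sum_f_R0 (fun k => u k y) N) (u (S N))); auto.
Qed.

(* The derivative series is normally convergent on the ball of radius [|al| + 1] around [0]. *)
Lemma is_derive_dirichlet_log k al :
  is_derive (dirichlet_log A k) al (- dirichlet_log A (S k) al).
Proof.
  set (u := fun n y => A n * ln (INR (S n)) ^ k * Rpower (INR (S n)) (- y)).
  set (du := fun n y => - (A n * ln (INR (S n)) ^ (S k) * Rpower (INR (S n)) (- y))).
  assert (Hr : 0 < Rabs al + 1) by (pose proof (Rabs_pos al); lra).
  set (r := mkposreal _ Hr).
  set (An := fun n => A n * Rpower (INR (S n)) (INR (S k) + (Rabs al + 1))).
  assert (HAn : ex_series An) by (apply A_summable; pose proof (pos_INR (S k)); lra).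
  assert (Hcvn : CVN_r du r).
  { exists An, (Series An). split.
    - apply is_lim_seq_Reals.
      assert (is_series (fun k => Rabs (An k)) (Series An)).
      { eapply is_series_ext; [|apply Series_correct, HAn].
        intros n. unfold An. symmetry. apply Rabs_right, Rle_ge, Rmult_le_pos;
          [apply A_nonneg | left; apply Rpower_pos]. }
      eapply is_lim_seq_ext; [|exact H]. intros n. rewrite sum_n_Reals. reflexivity.
    - intros n y Hy. unfold du, An. rewrite Rabs_Ropp. apply dirichlet_log_term_le.
      unfold Boule in Hy. simpl in Hy. rewrite Rminus_0_r in Hy. lra. }
  destruct (CVN_CVU_r du r Hcvn al ltac:(simpl; lra)) as [e He].
  assert (HD : derivable_pt_lim (fun y => Series (fun n => u n y)) al (Series (fun n => du n al))).
  { apply (CVU_derivable (fun n => SP u n) (fun n => SP du n) (fun y => Series (fun n => u n y))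
             (fun y => Series (fun n => du n y)) al e He).
    - intros x Hx. apply is_lim_seq_Reals.
      eapply is_lim_seq_ext; [|exact (Series_correct _ (ex_series_dirichlet_log k x))].
      intros n. rewrite sum_n_Reals. reflexivity.
    - intros n x Hx. apply derivable_pt_lim_SP. intros m. apply is_derive_Reals.
      unfold u, du, Rpower. auto_derive; [auto | simpl; ring].
    - unfold Boule. rewrite Rminus_diag, Rabs_R0. apply cond_pos. }
  apply is_derive_Reals. unfold dirichlet_log.
  replace (- Series (fun n => A n * ln (INR (S n)) ^ S k * Rpower (INR (S n)) (- al)))
    with (Series (fun n => du n al)) by (unfold du; rewrite Series_opp; reflexivity).
  exact HD.
Qed.

End Dirichlet.

Lemma Rpower_le_exp m e u : 0 <= m -> 0 < e -> 0 < u ->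
  Rpower u m <= Rpower ((m + 1) / e) m * exp (e * u).
Proof.
  intros Hm He Hu. unfold Rpower. rewrite <- exp_plus. apply exp_le_compat.
  assert (Hm1 : 0 < (m + 1) / e) by (apply Rdiv_lt_0_compat; lra).
  assert (Hv : 0 < u * e / (m + 1)) by (apply Rdiv_lt_0_compat; nra).
  replace u with ((u * e / (m + 1)) * ((m + 1) / e)) at 1 by (field; lra).
  rewrite ln_mult by assumption.
  pose proof (ln_le_sub_1 _ Hv).
  assert (m * (u * e / (m + 1)) <= e * u).
  { apply Rmult_le_reg_r with (m + 1); [lra|]. unfold Rdiv.
    replace (m * (u * e * / (m + 1)) * (m + 1)) with (m * (u * e)) by (field; lra). nra. }
  nra.
Qed.

Lemma ex_series_Rpower_exp m c : 0 <= m -> 0 < c ->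
  ex_series (fun n => Rpower (INR (S n)) m * exp (- c * INR (S n))).
Proof.
  intros Hm Hc. set (K := Rpower ((m + 1) / (c / 2)) m).
  apply (ex_series_le (K := R_AbsRing) (V := R_CompleteNormedModule) _
           (fun n => K * exp (- (c / 2)) * exp (- (c / 2)) ^ n)).
  - intros n. pose proof (lt_0_INR (S n) ltac:(lia)).
    change norm with Rabs. rewrite Rabs_right
      by (apply Rle_ge, Rmult_le_pos; left; [apply Rpower_pos | apply exp_pos]).
    replace (K * exp (- (c / 2)) * exp (- (c / 2)) ^ n)
      with (K * exp (c / 2 * INR (S n)) * exp (- c * INR (S n)))
      by (rewrite exp_pow_INR, S_INR, !Rmult_assoc, <- !exp_plus; apply Rmult_eq_compat_l, f_equal; lra).
    apply Rmult_le_compat_r; [left; apply exp_pos | apply Rpower_le_exp; lra].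
  - apply (ex_series_scal_l (K := R_AbsRing) (V := R_CompleteNormedModule)), ex_series_geom.
    rewrite Rabs_right by (left; apply exp_pos). rewrite <- exp_0. apply exp_increasing. lra.
Qed.

Definition KM_weight (p B : R) (j : nat) (n : nat) : R :=
  fp p (INR (S n) / B ^ j) ^ 2 * (2 * INR (S n) + 1).

Lemma KM_dirichlet_log B p cB j al :
  KM B p cB j al = / Nj B cB j * dirichlet_log (KM_weight p B j) 0 al.
Proof.
  unfold KM, dirichlet_log. f_equal. apply Series_ext. intros n. cbv zeta. unfold KM_weight. ring.
Qed.

Lemma KM_weight_nonneg p B j n : 0 <= KM_weight p B j n.
Proof.
  unfold KM_weight. apply Rmult_le_pos; [apply pow2_ge_0|].
  rewrite S_INR; pose proof (pos_INR n); lra.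
Qed.

(* With [h = B^-j] and [l >= 1]: [f_p(l h)^2 (2l+1) <= 3 h^(4p) l^(4p+1) exp (-2 h^2 l)]. *)
Lemma KM_weight_summable p B j r : 0 < p -> 1 < B -> 0 <= r ->
  ex_series (fun n => KM_weight p B j n * Rpower (INR (S n)) r).
Proof.
  intros Hp HB Hr. set (h := / B ^ j).
  assert (Hh : 0 < h) by (apply Rinv_0_lt_compat, pow_lt; lra).
  assert (Hh2 : 0 < h ^ 2) by (apply pow_lt, Hh).
  apply (ex_series_le (K := R_AbsRing) (V := R_CompleteNormedModule) _
           (fun n => 3 * Rpower h (4 * p) *
                     (Rpower (INR (S n)) (4 * p + 1 + r) * exp (- (2 * h ^ 2) * INR (S n))))).
  - intros n. change norm with Rabs. set (l := INR (S n)).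
    assert (Hl : 1 <= l) by (unfold l; rewrite S_INR; pose proof (pos_INR n); lra).
    rewrite Rabs_right by (apply Rle_ge, Rmult_le_pos; [apply KM_weight_nonneg | left; apply Rpower_pos]).
    unfold KM_weight, fp. fold l.
    replace (l / B ^ j) with (l * h) by (unfold h; field; apply pow_nonzero; lra).
    assert (E1 : (Rpower (l * h) (2 * p) * exp (- (l * h) ^ 2)) ^ 2 =
                 Rpower l (4 * p) * Rpower h (4 * p) * exp (- 2 * h ^ 2 * l ^ 2)).
    { rewrite <- Rpower_mult_distr by lra. unfold Rpower.
      rewrite <- !exp_plus, exp_pow_INR. f_equal. simpl. ring. }
    assert (E2 : exp (- 2 * h ^ 2 * l ^ 2) <= exp (- (2 * h ^ 2) * l))
      by (apply exp_le_compat; assert (l <= l ^ 2) by nra; nra).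
    assert (E3 : Rpower l (4 * p + 1 + r) = Rpower l (4 * p) * l * Rpower l r)
      by (rewrite !Rpower_plus, Rpower_1 by lra; reflexivity).
    rewrite E1, E3.
    pose proof (Rpower_pos l (4 * p)). pose proof (Rpower_pos h (4 * p)). pose proof (Rpower_pos l r).
    pose proof (exp_pos (- 2 * h ^ 2 * l ^ 2)).
    apply Rle_trans
      with (Rpower l (4 * p) * Rpower h (4 * p) * exp (- (2 * h ^ 2) * l) * (3 * l) * Rpower l r).
    + apply Rmult_le_compat_r; [lra|].
      apply Rmult_le_compat; [apply Rmult_le_pos; [apply Rmult_le_pos|]; lra | lra | |lra].
      apply Rmult_le_compat_l; [apply Rmult_le_pos|]; lra.
    + right. ring.
  - apply (ex_series_scal_l (K := R_AbsRing) (V := R_CompleteNormedModule)), ex_series_Rpower_exp; lra.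
Qed.

Lemma is_derive_KM B p cB j al : 0 < p -> 1 < B ->
  is_derive (fun a => KM B p cB j a) al (/ Nj B cB j * - dirichlet_log (KM_weight p B j) 1 al).
Proof.
  intros Hp HB. eapply is_derive_ext; [intros t; symmetry; apply KM_dirichlet_log|].
  apply is_derive_scal, is_derive_dirichlet_log;
    [apply KM_weight_nonneg | intros r Hr; apply KM_weight_summable; assumption].
Qed.

Lemma Derive_KM B p cB j al : 0 < p -> 1 < B ->
  Derive (fun a => KM B p cB j a) al = / Nj B cB j * - dirichlet_log (KM_weight p B j) 1 al.
Proof. intros Hp HB. apply is_derive_unique, is_derive_KM; assumption. Qed.

Lemma is_derive_Derive_KM B p cB j al : 0 < p -> 1 < B ->
  is_derive (Derive (fun a => KM B p cB j a)) al (/ Nj B cB j * dirichlet_log (KM_weight p B j) 2 al).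
Proof.
  intros Hp HB. eapply is_derive_ext; [intros t; symmetry; apply Derive_KM; assumption|].
  replace (/ Nj B cB j * dirichlet_log (KM_weight p B j) 2 al)
    with (/ Nj B cB j * - (- dirichlet_log (KM_weight p B j) 2 al)) by ring.
  apply is_derive_scal, (is_derive_opp (fun t => dirichlet_log (KM_weight p B j) 1 t)).
  apply is_derive_dirichlet_log;
    [apply KM_weight_nonneg | intros r Hr; apply KM_weight_summable; assumption].
Qed.

(* The factor [2l + 1] of [K_j^M] becomes [2 + 1/l] after pulling out [l]. *)
Definition sample_sum (a : R) (s : nat) (h : R) (n : nat) : R :=
  2 * (h * log_gauss a s (INR (S n) * h)) + h * log_gauss a s (INR (S n) * h) / INR (S n).

Lemma sample_sum_error a s : -1 < a -> exists I K g, 0 < g /\ 0 <= K /\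
  is_RInt_gen (log_gauss a s) (at_right 0) (Rbar_locally p_infty) I /\
  forall h, 0 < h -> is_series (sample_sum a s h) (Series (sample_sum a s h)) /\
    Rabs (Series (sample_sum a s h) - 2 * I) <= 3 * K * Rpower h g.
Proof.
  intros Ha. destruct (log_gauss_Riemann a s Ha) as [I [K [g [Hg [HK [HI HR]]]]]].
  exists I, K, g. split; [exact Hg|]. split; [exact HK|]. split; [exact HI|].
  intros h Hh. destruct (HR h Hh) as [Sh [E [HS [HE [HSb HEb]]]]].
  assert (Hs : is_series (sample_sum a s h) (2 * Sh + E)).
  { apply (is_series_plus (K := R_AbsRing) (V := R_NormedModule)); [|exact HE].
    apply (is_series_scal (K := R_AbsRing) (V := R_NormedModule)), HS. }
  rewrite (is_series_unique _ _ Hs). split; [exact Hs|].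
  replace (2 * Sh + E - 2 * I) with (2 * (Sh - I) + E) by ring.
  eapply Rle_trans; [apply Rabs_triang|]. rewrite Rabs_mult, (Rabs_right 2) by lra. lra.
Qed.

Lemma sample_sum_pos a h n : 0 < h -> 0 < sample_sum a 0 h n.
Proof.
  intros Hh. unfold sample_sum. pose proof (lt_0_INR (S n) ltac:(lia)).
  pose proof (log_gauss_0_pos a (INR (S n) * h) ltac:(nra)).
  assert (0 < h * log_gauss a 0 (INR (S n) * h) / INR (S n)) by (apply Rdiv_lt_0_compat; nra).
  nra.
Qed.

Lemma is_series_pos (a : nat -> R) l : is_series a l -> (forall n, 0 < a n) -> 0 < l.
Proof.
  intros H Hp. apply is_lim_seq_partial_sum, is_lim_seq_incr_1 in H.
  assert (Hb : forall N, a 0%nat <= partial_sum a (S N)).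
  { induction N as [|N IH]; simpl in *; [lra|]. specialize (Hp (S N)). lra. }
  pose proof (is_lim_seq_le _ _ _ _ Hb (is_lim_seq_const (a 0%nat)) H). specialize (Hp 0%nat).
  simpl in *. lra.
Qed.

Lemma KM_weight_sample p B j al n : 1 < B ->
  KM_weight p B j n * Rpower (INR (S n)) (- al) =
  B ^ (2 * j) * Rpower B (- al * INR j) * sample_sum (4 * p + 1 - al) 0 (/ B ^ j) n.
Proof.
  intros HB. set (h := / B ^ j). assert (Hh : 0 < h) by (apply Rinv_0_lt_compat, pow_lt; lra).
  set (l := INR (S n)). assert (Hl : 0 < l) by (apply lt_0_INR; lia).
  set (u := l * h). assert (Hu : 0 < u) by (unfold u; nra).
  assert (F1 : Rpower l (- al) = Rpower u (- al) * Rpower h al).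
  { unfold u, Rpower. rewrite ln_mult by assumption. rewrite <- exp_plus. f_equal. ring. }
  assert (F2 : Rpower u (4 * p + 1 - al) = Rpower u (2 * p) ^ 2 * u * Rpower u (- al)).
  { replace (4 * p + 1 - al) with (2 * p + (2 * p + (1 + - al))) by ring.
    rewrite !Rpower_plus, Rpower_1 by exact Hu. ring. }
  assert (F3 : exp (- 2 * u ^ 2) = exp (- u ^ 2) ^ 2) by (rewrite exp_pow_INR; f_equal; simpl; ring).
  assert (F4 : Rpower B (- al * INR j) = Rpower h al).
  { unfold Rpower, h. rewrite ln_Rinv, ln_pow by (try apply pow_lt; lra). f_equal. ring. }
  assert (F5 : B ^ (2 * j) = / h ^ 2).
  { unfold h. rewrite pow_inv, Rinv_inv, <- pow_mult. f_equal. lia. }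
  unfold KM_weight, sample_sum, fp, log_gauss. fold h l.
  replace (l / B ^ j) with u by reflexivity. fold u. rewrite F1, F2, F3, F4, F5, pow_O.
  match goal with |- ?x = ?y => change (x = y :> R) end. unfold u. field. lra.
Qed.

Lemma sample_sum_log a h s n : sample_sum a s h n = sample_sum a 0 h n * ln (INR (S n) * h) ^ s.
Proof. unfold sample_sum, log_gauss. rewrite pow_O. field. apply not_0_INR. lia. Qed.

(* Splitting [ln l = ln (l B^-j) + j ln B] expands [(ln l)^k] binomially. *)
Lemma dirichlet_log_KM_weight p B j al G0 G1 G2 : 1 < B ->
  let a := 4 * p + 1 - al in let h := / B ^ j in
  let W := B ^ (2 * j) * Rpower B (- al * INR j) in let J := INR j * ln B in
  is_series (sample_sum a 0 h) G0 -> is_series (sample_sum a 1 h) G1 ->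
  is_series (sample_sum a 2 h) G2 ->
  dirichlet_log (KM_weight p B j) 0 al = W * G0 /\
  dirichlet_log (KM_weight p B j) 1 al = W * (G1 + J * G0) /\
  dirichlet_log (KM_weight p B j) 2 al = W * (G2 + 2 * J * G1 + J ^ 2 * G0).
Proof.
  intros HB a h W J H0 H1 H2.
  assert (Hterm : forall n k, KM_weight p B j n * ln (INR (S n)) ^ k * Rpower (INR (S n)) (- al) =
                              W * (sample_sum a 0 h n * (ln (INR (S n) * h) + J) ^ k)).
  { intros n k.
    replace (ln (INR (S n))) with (ln (INR (S n) * h) + J)
      by (unfold h, J; rewrite ln_mult, ln_Rinv, ln_pow by (try apply Rinv_0_lt_compat;
            try apply pow_lt; try apply lt_0_INR; lia || lra); ring).
    replace (KM_weight p B j n * (ln (INR (S n) * h) + J) ^ k * Rpower (INR (S n)) (- al))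
      with ((KM_weight p B j n * Rpower (INR (S n)) (- al)) * (ln (INR (S n) * h) + J) ^ k) by ring.
    rewrite KM_weight_sample by exact HB. fold h W. unfold a. ring. }
  assert (Hsc : forall u l c, is_series u l -> is_series (fun n => c * u n) (c * l))
    by (intros u l c Hu; apply (is_series_scal (K := R_AbsRing) (V := R_NormedModule)), Hu).
  assert (Hpl : forall u v l l', is_series u l -> is_series v l' ->
                                is_series (fun n => u n + v n) (l + l'))
    by (intros u v l l' Hu Hv; apply (is_series_plus (K := R_AbsRing) (V := R_NormedModule)); assumption).
  unfold dirichlet_log. split; [|split]; apply is_series_unique.
  - eapply is_series_ext; [|apply (Hsc _ _ W H0)].
    intros n. rewrite Hterm. simpl. ring.
  - eapply is_series_ext; [|apply (Hsc _ _ W (Hpl _ _ _ _ H1 (Hsc _ _ J H0)))].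
    intros n. rewrite Hterm, (sample_sum_log a h 1 n). simpl. ring.
  - eapply is_series_ext;
      [|apply (Hsc _ _ W (Hpl _ _ _ _ (Hpl _ _ _ _ H2 (Hsc _ _ (2 * J) H1)) (Hsc _ _ (J ^ 2) H0)))].
    intros n. rewrite Hterm, (sample_sum_log a h 1 n), (sample_sum_log a h 2 n). simpl. ring.
Qed.

Lemma is_lim_seq_INR_mul_geom q : 0 < q < 1 -> is_lim_seq (fun j => INR j * q ^ j) 0.
Proof.
  intros Hq. set (a := fun n => INR (S n) * q ^ S n).
  assert (Ha : forall n, a n <> 0)
    by (intros n; apply Rmult_integral_contrapositive;
        split; [apply not_0_INR; lia | apply pow_nonzero; lra]).
  assert (Hinv : is_lim_seq (fun n => / INR (S n)) 0).
  { pose proof is_lim_seq_INR as HINR. apply is_lim_seq_incr_1 in HINR.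
    replace (Finite 0) with (Rbar_inv p_infty) by reflexivity.
    apply (is_lim_seq_inv (fun n => INR (S n))); [exact HINR | discriminate]. }
  assert (Hratio : is_lim_seq (fun n => Rabs (a (S n) / a n)) q).
  { apply is_lim_seq_ext with (fun n => (1 + / INR (S n)) * q).
    - intros n. unfold a. pose proof (lt_0_INR (S n) ltac:(lia)). pose proof (pow_lt q (S n) (proj1 Hq)).
      change (q ^ S (S n)) with (q * q ^ S n). rewrite (S_INR (S n)).
      rewrite Rabs_right; [field; lra|].
      apply Rle_ge, Rdiv_le_0_compat; [|apply Rmult_lt_0_compat; lra]. apply Rmult_le_pos; nra.
    - pose proof (is_lim_seq_mult' _ _ _ _
        (is_lim_seq_plus' _ _ _ _ (is_lim_seq_const 1) Hinv) (is_lim_seq_const q)) as Hl.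
      rewrite Rplus_0_r, Rmult_1_l in Hl. exact Hl. }
  pose proof (ex_series_lim_0 _ (ex_series_DAlembert a q (proj2 Hq) Ha Hratio)) as H.
  apply is_lim_seq_incr_1. apply (is_lim_seq_abs_0 a) in H.
  eapply is_lim_seq_ext; [|exact H]. reflexivity.
Qed.

Lemma is_lim_seq_abs_le_0 (x y : nat -> R) :
  (forall n, Rabs (x n) <= y n) -> is_lim_seq y 0 -> is_lim_seq x 0.
Proof.
  intros H Hy. apply (is_lim_seq_le_le (fun n => - y n) x y); [| |exact Hy].
  - intros n. specialize (H n). split; [|pose proof (Rle_abs (x n)); lra].
    pose proof (Rle_abs (- x n)). rewrite Rabs_Ropp in *. lra.
  - apply is_lim_seq_opp in Hy. simpl in Hy. rewrite Ropp_0 in Hy. exact Hy.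
Qed.

Lemma is_lim_seq_geom_error (u : nat -> R) l K q : 0 < q < 1 ->
  (forall j, Rabs (u j - l) <= K * q ^ j) ->
  is_lim_seq (fun j => u j - l) 0 /\ is_lim_seq (fun j => INR j * (u j - l)) 0.
Proof.
  intros Hq Hu. split.
  - apply (is_lim_seq_abs_le_0 _ (fun j => K * q ^ j)); [exact Hu|].
    pose proof (is_lim_seq_scal_l _ K 0 (is_lim_seq_geom q ltac:(rewrite Rabs_right; lra))) as H.
    simpl in H. rewrite Rmult_0_r in H. exact H.
  - apply (is_lim_seq_abs_le_0 _ (fun j => K * (INR j * q ^ j))).
    + intros j. rewrite Rabs_mult, Rabs_right by (apply Rle_ge, pos_INR).
      specialize (Hu j). pose proof (pos_INR j). nra.
    + pose proof (is_lim_seq_scal_l _ K 0 (is_lim_seq_INR_mul_geom q Hq)) as H.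
      simpl in H. rewrite Rmult_0_r in H. exact H.
Qed.

Lemma is_lim_seq_ratio_error (w u v : nat -> R) lu lv : lv <> 0 -> (forall j, v j <> 0) ->
  is_lim_seq v lv -> is_lim_seq (fun j => w j * (u j - lu)) 0 ->
  is_lim_seq (fun j => w j * (v j - lv)) 0 ->
  is_lim_seq (fun j => w j * (u j / v j - lu / lv)) 0.
Proof.
  intros Hlv Hv Hvl Hu Hv'.
  apply is_lim_seq_ext with (fun j => (w j * (u j - lu) * lv - lu * (w j * (v j - lv))) / (v j * lv)).
  { intros j. field. split; [exact Hlv | apply Hv]. }
  pose proof (is_lim_seq_minus' _ _ _ _ (is_lim_seq_mult' _ _ _ _ Hu (is_lim_seq_const lv))
                (is_lim_seq_mult' _ _ _ _ (is_lim_seq_const lu) Hv')) as Hnum.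
  pose proof (is_lim_seq_div' _ _ _ _ Hnum (is_lim_seq_mult' _ _ _ _ Hvl (is_lim_seq_const lv))
                ltac:(apply Rmult_integral_contrapositive; split; exact Hlv)) as H.
  replace ((0 * lv - lu * 0) / (lv * lv)) with 0 in H by (field; exact Hlv). exact H.
Qed.

Definition KM_sample_series (p B alpha : R) (s j : nat) : R :=
  Series (sample_sum (4 * p + 1 - alpha) s (/ B ^ j)).

Section Proposition20.

Variables (B p cB alpha : R).
Hypotheses (hB : 1 < B) (hp : 0 < p) (hcB : 0 < cB) (halpha : 0 < 4 * p + 2 - alpha).

Let a := 4 * p + 1 - alpha.
Local Notation G := (KM_sample_series p B alpha).
Local Notation L s := (cB * Ips p cB s alpha).

Lemma exponent_gt_m1 : -1 < a.
Proof. unfold a. lra. Qed.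

Lemma Rinv_pow_pos j : 0 < / B ^ j.
Proof. apply Rinv_0_lt_compat, pow_lt. lra. Qed.

Lemma Ips_of_is_RInt_gen s I : is_RInt_gen (log_gauss a s) (at_right 0) (Rbar_locally p_infty) I -> L s = 2 * I.
Proof.
  intros HI. unfold Ips. fold a.
  replace (RInt_gen _ _ _) with I by (symmetry; apply is_RInt_gen_unique, HI). field. lra.
Qed.

Lemma is_series_KM_sample_series s j : is_series (sample_sum a s (/ B ^ j)) (G s j).
Proof.
  destruct (sample_sum_error a s exponent_gt_m1) as [I [K [g [_ [_ [_ H]]]]]].
  apply (H (/ B ^ j) (Rinv_pow_pos j)).
Qed.

(* [h_j^g = (B^-g)^j] turns the Riemann-sum error into a geometric one. *)
Lemma KM_sample_series_error s : is_lim_seq (fun j => G s j - L s) 0 /\ is_lim_seq (fun j => INR j * (G s j - L s)) 0.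
Proof.
  destruct (sample_sum_error a s exponent_gt_m1) as [I [K [g [Hg [HK [HI H]]]]]].
  rewrite (Ips_of_is_RInt_gen s I HI).
  apply (is_lim_seq_geom_error _ _ (3 * K) (Rpower B (- g))).
  - split; [apply Rpower_pos|]. rewrite <- (Rpower_O B) by lra. apply Rpower_lt; lra.
  - intros j. replace (Rpower B (- g) ^ j) with (Rpower (/ B ^ j) g).
    + apply (H (/ B ^ j) (Rinv_pow_pos j)).
    + unfold Rpower. rewrite ln_Rinv, ln_pow, exp_pow_INR by (try apply pow_lt; lra).
      f_equal. ring.
Qed.

Lemma KM_sample_series_0_pos j : 0 < G 0 j.
Proof. apply (is_series_pos _ _ (is_series_KM_sample_series 0 j)). intros n. apply sample_sum_pos, Rinv_pow_pos. Qed.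

Lemma Ips_0_pos : 0 < L 0.
Proof.
  destruct (sample_sum_error a 0 exponent_gt_m1) as [I [K [g [_ [_ [HI _]]]]]].
  rewrite (Ips_of_is_RInt_gen 0 I HI). pose proof (is_RInt_gen_log_gauss_0_pos a I HI). lra.
Qed.

Lemma sample_ratio_error (w : nat -> R) s : is_lim_seq (fun j => w j * (G s j - L s)) 0 ->
  is_lim_seq (fun j => w j * (G 0 j - L 0)) 0 ->
  is_lim_seq (fun j => w j * (G s j / G 0 j - Ips p cB s alpha / Ips p cB 0 alpha)) 0.
Proof.
  intros Hs H0. replace (Ips p cB s alpha / Ips p cB 0 alpha) with (L s / L 0).
  - apply is_lim_seq_ratio_error;
      [pose proof Ips_0_pos; lra | intros j; pose proof (KM_sample_series_0_pos j); lra | | exact Hs | exact H0].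
    pose proof (is_lim_seq_plus' _ _ _ _ (proj1 (KM_sample_series_error 0)) (is_lim_seq_const (L 0))) as H.
    rewrite Rplus_0_l in H. eapply is_lim_seq_ext; [|exact H]. intros j. simpl. ring.
  - pose proof Ips_0_pos. field. split; nra.
Qed.

Lemma sample_ratio_limit s : is_lim_seq (fun j => G s j / G 0 j - Ips p cB s alpha / Ips p cB 0 alpha) 0.
Proof.
  assert (Hone : forall s, is_lim_seq (fun j => 1 * (G s j - L s)) 0)
    by (intros s'; eapply is_lim_seq_ext; [|exact (proj1 (KM_sample_series_error s'))]; intros j; simpl; ring).
  eapply is_lim_seq_ext; [|exact (sample_ratio_error (fun _ => 1) s (Hone s) (Hone 0%nat))].
  intros j. simpl. ring.
Qed.

Lemma KM_relative_error : is_lim_seq (fun j => G 0 j / cB - Ips p cB 0 alpha) 0.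
Proof.
  pose proof (is_lim_seq_scal_l _ (/ cB) _ (proj1 (KM_sample_series_error 0))) as H.
  simpl in H. rewrite Rmult_0_r in H.
  eapply is_lim_seq_ext; [|exact H]. intros j. simpl. field. lra.
Qed.

Lemma second_derivative_error : is_lim_seq (fun j =>
  G 2 j / G 0 j - Ips p cB 2 alpha / Ips p cB 0 alpha
  + 2 * ln B * (INR j * (G 1 j / G 0 j - Ips p cB 1 alpha / Ips p cB 0 alpha))) 0.
Proof.
  pose proof (is_lim_seq_scal_l _ (2 * ln B) _
                (sample_ratio_error INR 1 (proj2 (KM_sample_series_error 1)) (proj2 (KM_sample_series_error 0))))
    as H1.
  pose proof (is_lim_seq_plus' _ _ _ _ (sample_ratio_limit 2) H1) as H. simpl in H.
  rewrite Rmult_0_r, Rplus_0_r in H. exact H.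
Qed.

Lemma dirichlet_log_KM_values j :
  let W := B ^ (2 * j) * Rpower B (- alpha * INR j) in let J := INR j * ln B in
  dirichlet_log (KM_weight p B j) 0 alpha = W * G 0 j /\
  dirichlet_log (KM_weight p B j) 1 alpha = W * (G 1 j + J * G 0 j) /\
  dirichlet_log (KM_weight p B j) 2 alpha = W * (G 2 j + 2 * J * G 1 j + J ^ 2 * G 0 j).
Proof.
  exact (dirichlet_log_KM_weight p B j alpha _ _ _ hB
           (is_series_KM_sample_series 0 j) (is_series_KM_sample_series 1 j) (is_series_KM_sample_series 2 j)).
Qed.

Lemma KM_eq_sample_series j : KM B p cB j alpha = Rpower B (- alpha * INR j) / cB * G 0 j.
Proof.
  rewrite KM_dirichlet_log. destruct (dirichlet_log_KM_values j) as [-> _]. unfold Nj.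
  pose proof (pow_lt B (2 * j) ltac:(lra)). field. lra.
Qed.

Lemma Derive_KM_eq_sample_series j : Derive (fun a => KM B p cB j a) alpha
  = - (INR j * ln B + G 1 j / G 0 j) * KM B p cB j alpha.
Proof.
  rewrite Derive_KM, KM_eq_sample_series by assumption. destruct (dirichlet_log_KM_values j) as [_ [-> _]]. unfold Nj.
  pose proof (pow_lt B (2 * j) ltac:(lra)). pose proof (KM_sample_series_0_pos j). field. lra.
Qed.

Lemma Derive2_KM_eq_sample_series j : Derive (Derive (fun a => KM B p cB j a)) alpha
  = ((INR j * ln B) ^ 2 + 2 * (INR j * ln B) * (G 1 j / G 0 j) + G 2 j / G 0 j) * KM B p cB j alpha.
Proof.
  rewrite (is_derive_unique _ _ _ (is_derive_Derive_KM B p cB j alpha hp hB)), KM_eq_sample_series.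
  destruct (dirichlet_log_KM_values j) as [_ [_ ->]]. unfold Nj.
  pose proof (pow_lt B (2 * j) ltac:(lra)). pose proof (KM_sample_series_0_pos j). field. lra.
Qed.

Lemma Ips_0_Gamma :
  Ips p cB 0 alpha = Rpower 2 (- (2 * p - alpha / 2 + 1)) / cB * Gamma (2 * p + 1 - alpha / 2).
Proof.
  destruct (sample_sum_error a 0 exponent_gt_m1) as [I [K [g [_ [_ [HI _]]]]]].
  set (x := 2 * p + 1 - alpha / 2).
  replace a with (2 * x - 1) in HI by (unfold x, a; lra).
  replace (Gamma x) with (Rpower 2 (x + 1) * I)
    by (symmetry; apply is_RInt_gen_unique, is_RInt_gen_gamma_integrand, HI).
  replace (2 * x - 1) with a in HI by (unfold x, a; lra).
  assert (HL := Ips_of_is_RInt_gen 0 I HI).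
  replace (Rpower 2 (- (2 * p - alpha / 2 + 1)) / cB * (Rpower 2 (x + 1) * I))
    with (Rpower 2 (- (2 * p - alpha / 2 + 1) + (x + 1)) * I / cB) by (rewrite Rpower_plus; field; lra).
  replace (- (2 * p - alpha / 2 + 1) + (x + 1)) with 1 by (unfold x; lra).
  rewrite Rpower_1 by lra. apply (Rmult_eq_reg_l cB); [|lra]. rewrite HL. field. lra.
Qed.

End Proposition20.

Theorem proposition20 (B p cB alpha : R)
  (hB : 1 < B) (hp : 0 < p) (hcB : 0 < cB) (halpha : 0 < 4 * p + 2 - alpha) :
  Ips p cB 0 alpha
    = Rpower 2 (- (2 * p - alpha / 2 + 1)) / cB * Gamma (2 * p + 1 - alpha / 2)
  /\ (exists eps : nat -> R, is_lim_seq eps 0 /\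
        forall j : nat,
          KM B p cB j alpha = (Ips p cB 0 alpha + eps j) * Rpower B (- alpha * INR j))
  /\ (forall j : nat, ex_derive (fun a => KM B p cB j a) alpha)
  /\ (exists eps : nat -> R, is_lim_seq eps 0 /\
        forall j : nat,
          Derive (fun a => KM B p cB j a) alpha
          = - (INR j * ln B + Ips p cB 1 alpha / Ips p cB 0 alpha + eps j)
              * KM B p cB j alpha)
  /\ (forall j : nat, ex_derive (Derive (fun a => KM B p cB j a)) alpha)
  /\ (exists eps : nat -> R, is_lim_seq eps 0 /\
        forall j : nat,
          Derive (Derive (fun a => KM B p cB j a)) alpha
          = (INR j ^ 2 * (ln B) ^ 2
             + 2 * INR j * ln B * (Ips p cB 1 alpha / Ips p cB 0 alpha)
             + Ips p cB 2 alpha / Ips p cB 0 alpha + eps j)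
              * KM B p cB j alpha).
Proof.
  set (q s j := KM_sample_series p B alpha s j / KM_sample_series p B alpha 0 j).
  set (r s := Ips p cB s alpha / Ips p cB 0 alpha).
  split; [apply Ips_0_Gamma; assumption|].
  split.
  { exists (fun j => KM_sample_series p B alpha 0 j / cB - Ips p cB 0 alpha).
    split; [apply KM_relative_error; assumption|].
    intros j. rewrite KM_eq_sample_series by assumption. field. lra. }
  split; [intros j; eexists; apply is_derive_KM; assumption|].
  split.
  { exists (fun j => q 1%nat j - r 1%nat).
    split; [apply sample_ratio_limit; assumption|].
    intros j. rewrite Derive_KM_eq_sample_series by assumption. unfold q, r. ring. }
  split; [intros j; eexists; apply is_derive_Derive_KM; assumption|].
  exists (fun j => q 2%nat j - r 2%nat + 2 * ln B * (INR j * (q 1%nat j - r 1%nat))).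
  split; [apply second_derivative_error; assumption|].
  intros j. rewrite Derive2_KM_eq_sample_series by assumption. unfold q, r. ring.
Qed.
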